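(* Let $0<b<c<1$. The safe $c$-capacity for $\mathrm{Indep}_b$ equals \[ \frac{-b\log(1-c)+c\log(1-b)}{c}. \]
   Context: All logarithms are base $2$. Collaborating cryptogenography protocol: there are $n$ players $\mathrm{plr}_1,\dots,\mathrm{plr}_n$; a secret $X$ (finitely supported) and indicators $L_1,\dots,L_n\in\{0,1\}$ ($L_i=1$ means $\mathrm{plr}_i$ knows $X$) have a joint distribution. A protocol $\pi$ specifies, for every possible partial transcript $t^k=(t_1,\dots,t_k)$ (the tuple of the first $k$ messages): whether communication stops; if not, which player $\mathrm{plr}_i$ sends the next message; and probability distributions $p_?$ and $(p_x)_{x}$ on a finite message set (depending on $t^k$). $\mathrm{plr}_i$ draws the next message, with fresh independent randomness, from $p_?$ if $L_i=0$ and from $p_x$ if $L_i=1$ and $X=x$. There is a number $\mathrm{length}(\pi)$ such that the protocol always stops after at most that many messages. $T$ denotes the random full transcript. Risky/safe protocols: for $L=(L_1,\dots,L_n)$ a random vector in $\{0,1\}^n$, a risky $(n,h,L,c,\epsilon)$-protocol is a collaborating cryptogenography protocol together with a function $D$ from transcripts to $\mathcal X=\{1,\dots,2^{\lceil h\rceil}\}$ such that, when $X$ is uniform on $\mathcal X$ and independent of $L$, for every $x\in\mathcal X$, with probability at least $1-\epsilon$ a transcript $t$ drawn from $T$ conditioned on $X=x$ satisfies both $\Pr(L_i=1\mid T=t,X=x)\le c$ for all $i$, and $D(t)=x$. A safe $(n,h,L,c,\epsilon)$-protocol is a risky one that additionally satisfies $\Pr(L_i=1\mid T=t,X=x)\le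 c$ for all $i,t,x$ with $\Pr(T=t,X=x)>0$. $\mathrm{Indep}_b(n)$ is the random vector $(L_1,\dots,L_n)$ of independent $\{0,1\}$-variables with $\Pr(L_i=1)=b$. A rate $R$ is safely (resp. riskily) $c$-achievable for $\mathrm{Indep}_b$ if for all $\epsilon>0$ and all $n_0$ there is a safe (resp. risky) $(n,nR,\mathrm{Indep}_b(n),c,\epsilon)$-protocol with $n\ge n_0$. The safe (resp. risky) $c$-capacity for $\mathrm{Indep}_b$ is the supremum of all safely (resp. riskily) $c$-achievable rates. *)

From Stdlib Require Import Reals Lra Lia List.
Import ListNotations.
Open Scope R_scope.

Definition log2 (x : R) : R := ln x / ln 2.

(** Ceiling of a real number ([Int_part] is the floor). *)
Definition Rceil (h : R) : Z := (- Int_part (- h))%Z.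

(** Size of the secret space X = {1,...,2^ceil(h)}; we label the secrets
    0, ..., Xsize h - 1.  (For ceil(h) < 0 we take the size to be 1.) *)
Definition Xsize (h : R) : nat := (2 ^ Z.to_nat (Rceil h))%nat.

Definition rsum (f : nat -> R) (l : list nat) : R :=
  fold_right (fun a acc => f a + acc) 0 l.

(** A step of the protocol: [None] = communication stops;
    [Some (i, M, pq, px)] = player [i] (indexed 0..n-1) sends the next message,
    drawn from the message set {0,...,M-1}, according to [pq] if it does not
    know X, and according to [px x] if it knows X = x. *)
Definition step : Type := option (nat * nat * (nat -> R) * (nat -> nat -> R)).

(** A collaborating cryptogenography protocol: a length bound and, for each
    partial transcript (list of messages so far), the next step. *)
Record protocol : Type := Protocol {
  plen : nat;
  paction : list nat -> step
}.

Definition is_dist (M : nat) (p : nat -> R) : Prop :=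
  (forall m, 0 <= p m) /\ rsum p (seq 0 M) = 1.

Definition wf_protocol (n K : nat) (P : protocol) : Prop :=
  (forall t, (plen P <= length t)%nat -> paction P t = None) /\
  (forall t i M pq px, paction P t = Some (i, M, pq, px) ->
     (i < n)%nat /\ is_dist M pq /\ (forall x, (x < K)%nat -> is_dist M (px x))).

(** Probability that the protocol, started after the partial transcript [pre],
    produces exactly the continuation [rest] and then stops, given X = x and
    knowledge vector L = l. *)
Fixpoint tprob (P : protocol) (x : nat) (l : list bool) (pre rest : list nat) : R :=
  match rest with
  | [] => match paction P pre with None => 1 | Some _ => 0 end
  | m :: rest' =>
      match paction P pre with
      | None => 0
      | Some (i, M, pq, px) =>
          (if Nat.ltb m M then (if nth i l false then px x m else pq m) else 0)
          * tprob P x l (pre ++ [m]) rest'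
      end
  end.

Fixpoint transcripts_from (P : protocol) (f : nat) (pre : list nat) : list (list nat) :=
  match paction P pre with
  | None => [pre]
  | Some (i0, M, pq0, px0) =>
      match f with
      | O => []
      | S f' => flat_map (fun m => transcripts_from P f' (pre ++ [m])) (seq 0 M)
      end
  end.

Definition transcripts (P : protocol) : list (list nat) :=
  transcripts_from P (plen P) [].

Fixpoint allbools (n : nat) : list (list bool) :=
  match n with
  | O => [[]]
  | S k => flat_map (fun l => [true :: l; false :: l]) (allbools k)
  end.

(** Law of Indep_b(n): Pr(L = l). *)
Definition indep_prob (b : R) (l : list bool) : R :=
  fold_right (fun (bi : bool) (acc : R) => ((if bi then b else 1 - b) * acc)%R) 1%R l.

(** Pr(T = t | X = x), with L ~ Indep_b(n) independent of X. *)
Definition prT (n : nat) (b : R) (P : protocol) (x : nat) (t : list nat) : R :=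
  fold_right (fun l acc => indep_prob b l * tprob P x l [] t + acc) 0 (allbools n).

(** Pr(T = t, L_i = 1 | X = x). *)
Definition prT_Li (n : nat) (b : R) (P : protocol) (i x : nat) (t : list nat) : R :=
  fold_right (fun l acc =>
      (if nth i l false then indep_prob b l * tprob P x l [] t else 0) + acc)
    0 (allbools n).

(** Pr(L_i = 1 | T = t, X = x)  (meaningful when Pr(T = t, X = x) > 0). *)
Definition posterior (n : nat) (b : R) (P : protocol) (i x : nat) (t : list nat) : R :=
  prT_Li n b P i x t / prT n b P x t.

Definition Rle_bool (a c : R) : bool := if Rle_dec a c then true else false.

Definition good (n : nat) (b c : R) (P : protocol) (D : list nat -> nat)
  (x : nat) (t : list nat) : bool :=
  forallb (fun i => Rle_bool (posterior n b P i x t) c) (seq 0 n) && Nat.eqb (D t) x.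

Definition risky_protocol (n : nat) (h b c eps : R) (P : protocol)
  (D : list nat -> nat) : Prop :=
  wf_protocol n (Xsize h) P /\
  (forall t, (D t < Xsize h)%nat) /\
  (forall x, (x < Xsize h)%nat ->
     1 - eps <= fold_right (fun t acc =>
                   (if good n b c P D x t then prT n b P x t else 0) + acc)
                 0 (transcripts P)).

Definition safe_protocol (n : nat) (h b c eps : R) (P : protocol)
  (D : list nat -> nat) : Prop :=
  risky_protocol n h b c eps P D /\
  (forall i x t, (i < n)%nat -> (x < Xsize h)%nat -> 0 < prT n b P x t ->
     posterior n b P i x t <= c).

Definition safely_achievable (b c Rt : R) : Prop :=
  forall eps, 0 < eps -> forall n0 : nat,
    exists n : nat, (n0 <= n)%nat /\
      exists (P : protocol) (D : list nat -> nat),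
        safe_protocol n (INR n * Rt) b c eps P D.

Definition is_safe_capacity (b c cap : R) : Prop :=
  is_lub (safely_achievable b c) cap.

(** For [L ~ Indep_b(n)] and [0 < b < c < 1] the safe [c]-capacity is
    [C = (- b log (1 - c) + c log (1 - b)) / c]; in nats, [C ln 2 = ln (1 - b) + kappa c b]
    where [kappa c = - ln (1 - c) / c] is the slope of the chord of [q |-> - ln (1 - q)].

    - Rectangle property: given [X = x], the probability of a transcript is a
      product of one factor per player, depending only on that player's
      knowledge bit ([tprob_factor]); hence the posterior of [L_i] only
      involves player [i]'s factors ([prT_split_player]).
    - Converse: let [P0] be the transcript law when nobody knows the secret.
      Safety and the convexity of [- ln (1 - q)] bound each player's share of
      the divergence [D(Pr(. | X = x) || P0)], giving [D <= n C]
      ([divergence_upper_bound]).  By pigeonhole some secret has a decoding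
      region of [P0]-mass at most [1 / |X|], and the Gibbs inequality gives
      [D >= (1 - eps) ln |X| - ln 2] ([safe_protocol_converse]).
    - Achievability: in the protocol [ach], each player sends one bit per
      candidate secret [y]: [1] if it knows that [X = y], a Bernoulli([s])
      bit otherwise.  The bias [s = b (1 - c) / (c (1 - b))] makes every
      posterior at most [c] ([ach_safe]); a threshold decoder errs with
      exponentially small probability below the capacity, by Chernoff bounds
      computed from the exact moment generating functions of the votes.
    - The theorem: [C] is the least upper bound of the safely achievable rates. *)

From Stdlib Require Import Reals Lra Lia List ZArith Classical.
Import ListNotations.
Open Scope R_scope.

(** * Finite sums and products over lists *)

Definition sumL {A : Type} (f : A -> R) (l : list A) : R :=
  fold_right (fun a acc => f a + acc) 0 l.

Definition prodL {A : Type} (f : A -> R) (l : list A) : R :=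
  fold_right (fun a acc => f a * acc) 1 l.

Lemma sumL_app {A : Type} (f : A -> R) l1 l2 : sumL f (l1 ++ l2) = sumL f l1 + sumL f l2.
Proof. induction l1 as [|a l1 IH]; simpl; [lra|]. unfold sumL in *; simpl; rewrite IH; lra. Qed.

Lemma sumL_flat_map {A B : Type} (f : B -> R) (g : A -> list B) l :
  sumL f (flat_map g l) = sumL (fun a => sumL f (g a)) l.
Proof. induction l as [|a l IH]; simpl; [reflexivity|]. rewrite sumL_app, IH. reflexivity. Qed.

Lemma sumL_ext {A : Type} (f g : A -> R) l :
  (forall a, In a l -> f a = g a) -> sumL f l = sumL g l.
Proof.
  induction l as [|a l IH]; intros H; [reflexivity|]. unfold sumL in *; simpl.
  rewrite H by (left; auto). rewrite IH; [reflexivity|]. intros; apply H; right; auto.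
Qed.

Lemma sumL_le {A : Type} (f g : A -> R) l :
  (forall a, In a l -> f a <= g a) -> sumL f l <= sumL g l.
Proof.
  induction l as [|a l IH]; intros H; unfold sumL in *; simpl; [lra|].
  apply Rplus_le_compat; [apply H; left; auto | apply IH; intros; apply H; right; auto].
Qed.

Lemma sumL_lt {A : Type} (f g : A -> R) l : l <> [] ->
  (forall a, In a l -> f a < g a) -> sumL f l < sumL g l.
Proof.
  destruct l as [|a l]; intros Hne H; [congruence|]. unfold sumL; simpl.
  fold (sumL f l) (sumL g l).
  assert (sumL f l <= sumL g l) by (apply sumL_le; intros; left; apply H; right; auto).
  specialize (H a (or_introl eq_refl)). lra.
Qed.

Lemma sumL_plus {A : Type} (f g : A -> R) l : sumL (fun a => f a + g a) l = sumL f l + sumL g l.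
Proof. induction l as [|a l IH]; unfold sumL in *; simpl; [lra|]. rewrite IH; lra. Qed.

Lemma sumL_minus {A : Type} (f g : A -> R) l : sumL (fun a => f a - g a) l = sumL f l - sumL g l.
Proof. induction l as [|a l IH]; unfold sumL in *; simpl; [lra|]. rewrite IH; lra. Qed.

Lemma sumL_scal {A : Type} (k : R) (f : A -> R) l : sumL (fun a => k * f a) l = k * sumL f l.
Proof. induction l as [|a l IH]; unfold sumL in *; simpl; [lra|]. rewrite IH; lra. Qed.

Lemma sumL_const {A : Type} (v : R) (l : list A) : sumL (fun _ => v) l = INR (length l) * v.
Proof.
  induction l as [|a l IH]; unfold sumL in *; [simpl; lra|].
  change (length (a :: l)) with (S (length l)). rewrite S_INR. simpl. rewrite IH. lra.
Qed.

Lemma sumL_nonneg {A : Type} (f : A -> R) l : (forall a, In a l -> 0 <= f a) -> 0 <= sumL f l.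
Proof.
  intros H. replace 0 with (sumL (fun _ : A => 0) l) by (rewrite sumL_const; ring).
  apply sumL_le; auto.
Qed.

Lemma sumL_elem_le {A : Type} (f : A -> R) l y :
  (forall a, In a l -> 0 <= f a) -> In y l -> f y <= sumL f l.
Proof.
  induction l as [|a l IH]; intros H Hy; [destruct Hy|]. unfold sumL; simpl; fold (sumL f l).
  destruct Hy as [<-|Hy].
  - pose proof (sumL_nonneg f l (fun a H' => H a (or_intror H'))). lra.
  - pose proof (H a (or_introl eq_refl)).
    pose proof (IH (fun a H' => H a (or_intror H')) Hy). lra.
Qed.

Lemma sumL_swap {A B : Type} (F : A -> B -> R) la lb :
  sumL (fun a => sumL (fun b => F a b) lb) la = sumL (fun b => sumL (fun a => F a b) la) lb.
Proof.
  induction la as [|a la IH]; simpl.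
  - rewrite sumL_const. simpl. induction lb as [|b lb IHb]; unfold sumL in *; simpl; lra.
  - change (sumL (fun b => F a b) lb + sumL (fun a0 => sumL (fun b => F a0 b) lb) la =
      sumL (fun b => F a b + sumL (fun a0 => F a0 b) la) lb).
    rewrite sumL_plus, IH. reflexivity.
Qed.

Lemma prodL_ext {A : Type} (f g : A -> R) l :
  (forall a, In a l -> f a = g a) -> prodL f l = prodL g l.
Proof.
  induction l as [|a l IH]; intros H; unfold prodL in *; simpl; [reflexivity|].
  rewrite H by (left; auto). rewrite IH; [reflexivity|]. intros; apply H; right; auto.
Qed.

Lemma prodL_mult {A : Type} (f g : A -> R) l : prodL (fun a => f a * g a) l = prodL f l * prodL g l.
Proof. induction l as [|a l IH]; unfold prodL in *; simpl; [lra|]. rewrite IH; lra. Qed.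

Lemma prodL_app {A : Type} (f : A -> R) l1 l2 : prodL f (l1 ++ l2) = prodL f l1 * prodL f l2.
Proof. induction l1 as [|a l1 IH]; unfold prodL in *; simpl; [lra|]. rewrite IH; lra. Qed.

Lemma prodL_map {A B : Type} (f : B -> R) (g : A -> B) l : prodL f (map g l) = prodL (fun a => f (g a)) l.
Proof. induction l as [|a l IH]; unfold prodL in *; simpl; [|rewrite IH]; reflexivity. Qed.

Lemma prodL_const {A : Type} (v : R) (l : list A) : prodL (fun _ => v) l = v ^ length l.
Proof. induction l as [|a l IH]; unfold prodL in *; simpl; [|rewrite IH]; reflexivity. Qed.

Lemma prodL_nonneg {A : Type} (f : A -> R) l : (forall a, In a l -> 0 <= f a) -> 0 <= prodL f l.
Proof.
  induction l as [|a l IH]; intros H; unfold prodL in *; simpl; [lra|].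
  apply Rmult_le_pos; [apply H; left; auto | apply IH; intros; apply H; right; auto].
Qed.

Lemma prodL_pos {A : Type} (f : A -> R) l : (forall a, In a l -> 0 < f a) -> 0 < prodL f l.
Proof.
  induction l as [|a l IH]; intros H; unfold prodL in *; simpl; [lra|].
  apply Rmult_lt_0_compat; [apply H; left; auto | apply IH; intros; apply H; right; auto].
Qed.

Lemma prodL_pos_factors {A : Type} (f : A -> R) l :
  (forall a, In a l -> 0 <= f a) -> 0 < prodL f l -> forall a, In a l -> 0 < f a.
Proof.
  induction l as [|a l IH]; intros H Hp a0 Ha; [destruct Ha|].
  unfold prodL in Hp; simpl in Hp; fold (prodL f l) in Hp.
  assert (0 <= f a) by (apply H; left; auto).
  assert (0 <= prodL f l) by (apply prodL_nonneg; intros; apply H; right; auto).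
  destruct Ha as [<-|Ha].
  - destruct (Req_dec (f a) 0) as [E|E]; [rewrite E in Hp|]; lra.
  - apply IH; auto; [intros; apply H; right; auto|].
    destruct (Req_dec (prodL f l) 0) as [E|E]; [rewrite E in Hp|]; lra.
Qed.

Lemma prodL_div {A : Type} (f g : A -> R) l :
  (forall a, In a l -> 0 < g a) -> prodL f l / prodL g l = prodL (fun a => f a / g a) l.
Proof.
  induction l as [|a l IH]; intros H; unfold prodL in *; simpl; [field|].
  fold (prodL f l) (prodL g l) (prodL (fun a => f a / g a) l) in *.
  rewrite <- IH by (intros; apply H; right; auto).
  assert (0 < g a) by (apply H; left; auto).
  assert (0 < prodL g l) by (apply prodL_pos; intros; apply H; right; auto).
  field; lra.
Qed.

Lemma ln_prodL {A : Type} (f : A -> R) l :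
  (forall a, In a l -> 0 < f a) -> ln (prodL f l) = sumL (fun a => ln (f a)) l.
Proof.
  induction l as [|a l IH]; intros H; unfold prodL, sumL in *; simpl; [apply ln_1|].
  fold (prodL f l) (sumL (fun a => ln (f a)) l) in *.
  rewrite ln_mult, IH; auto; [intros; apply H; right; auto | apply H; left; auto |].
  apply prodL_pos; intros; apply H; right; auto.
Qed.

Lemma sumL_delta_le d v s len : 0 <= v ->
  sumL (fun x => if Nat.eqb d x then v else 0) (seq s len) <= v.
Proof.
  intros Hv. revert s; induction len as [|len IH]; intros s; [unfold sumL; simpl; lra|].
  change (seq s (S len)) with (s :: seq (S s) len). unfold sumL at 1; simpl fold_right.
  fold (sumL (fun x => if Nat.eqb d x then v else 0) (seq (S s) len)).
  destruct (Nat.eqb_spec d s).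
  - subst. rewrite (sumL_ext _ (fun _ => 0)), sumL_const; [lra|].
    intros a Ha; apply in_seq in Ha. destruct (Nat.eqb_spec s a); [lia|auto].
  - specialize (IH (S s)). lra.
Qed.

Lemma prodL_factor_out (u : R) (g : nat -> R) i s len : (s <= i < s + len)%nat ->
  prodL (fun j => if Nat.eqb j i then u else g j) (seq s len) =
  u * prodL (fun j => if Nat.eqb j i then 1 else g j) (seq s len).
Proof.
  revert s; induction len as [|len IH]; intros s Hi; [lia|].
  change (seq s (S len)) with (s :: seq (S s) len).
  change (prodL ?f (?a :: ?l)) with (f a * prodL f l). cbv beta.
  destruct (Nat.eqb_spec s i).
  - subst.
    assert (Hrest : forall u', prodL (fun j => if Nat.eqb j i then u' else g j) (seq (S i) len)
                               = prodL g (seq (S i) len)).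
    { intros u'. apply prodL_ext. intros a Ha. apply in_seq in Ha.
      destruct (Nat.eqb_spec a i); [lia|auto]. }
    rewrite !Hrest. lra.
  - rewrite IH by lia. lra.
Qed.

Lemma prodL_one_index (v : nat -> R) j s len : (s <= j < s + len)%nat ->
  prodL (fun i => if Nat.eqb j i then v i else 1) (seq s len) = v j.
Proof.
  intros H. rewrite (prodL_ext _ (fun i => if Nat.eqb i j then v j else 1)).
  - rewrite prodL_factor_out by auto.
    rewrite (prodL_ext _ (fun _ => 1)), prodL_const, pow1; [lra|].
    intros a _; destruct (Nat.eqb a j); auto.
  - intros a _; destruct (Nat.eqb_spec j a), (Nat.eqb_spec a j); subst; auto; lia.
Qed.

Lemma prodL_seq_S (f : nat -> R) s len :
  prodL f (seq (S s) len) = prodL (fun j => f (S j)) (seq s len).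
Proof. rewrite <- seq_shift, prodL_map. reflexivity. Qed.

Lemma seq_offset a len : seq a len = map (fun j => a + j)%nat (seq 0 len).
Proof.
  induction len as [|len IH]; [reflexivity|].
  rewrite !seq_S, map_app, <- IH. reflexivity.
Qed.

(** * The law of [Indep_b(n)] *)

Definition bexp (b : R) (g : bool -> R) : R := b * g true + (1 - b) * g false.

Lemma indep_expect_prod b n (f : nat -> bool -> R) :
  sumL (fun l => indep_prob b l * prodL (fun j => f j (nth j l false)) (seq 0 n)) (allbools n)
  = prodL (fun j => bexp b (f j)) (seq 0 n).
Proof.
  revert f; induction n as [|n IH]; intros f.
  - unfold sumL, prodL, indep_prob; simpl; lra.
  - change (allbools (S n)) with (flat_map (fun l => [true :: l; false :: l]) (allbools n)).
    rewrite sumL_flat_map.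
    change (seq 0 (S n)) with (0%nat :: seq 1 n).
    change (prodL ?f (?a :: ?l)) with (f a * prodL f l). rewrite prodL_seq_S.
    rewrite <- (IH (fun j => f (S j))), <- sumL_scal.
    apply sumL_ext; intros l _. unfold sumL at 1; simpl.
    change (prodL ?f (?a :: ?l)) with (f a * prodL f l). rewrite !prodL_seq_S. simpl.
    unfold indep_prob, bexp; simpl; fold (indep_prob b l). lra.
Qed.

Lemma indep_total b n : sumL (indep_prob b) (allbools n) = 1.
Proof.
  pose proof (indep_expect_prod b n (fun _ _ => 1)) as H. unfold bexp in H.
  rewrite !prodL_const in H. replace (b * 1 + (1 - b) * 1) with 1 in H by ring.
  rewrite pow1 in H. rewrite <- H. apply sumL_ext. intros l _. lra.
Qed.

Lemma indep_marginal b n i : (i < n)%nat ->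
  sumL (fun l => if nth i l false then indep_prob b l else 0) (allbools n) = b.
Proof.
  intros Hi. set (f := fun (j : nat) (bb : bool) => if Nat.eqb j i then (if bb then 1 else 0) else 1).
  pose proof (indep_expect_prod b n f) as H.
  rewrite (prodL_ext _ (fun j => if Nat.eqb j i then b else 1)) in H
    by (intros j _; unfold f, bexp; destruct (Nat.eqb j i); lra).
  rewrite prodL_factor_out, (prodL_ext _ (fun _ => 1)), prodL_const, pow1 in H
    by (lia || (intros a _; destruct (Nat.eqb a i); auto)).
  rewrite <- Rmult_1_r, <- H. apply sumL_ext. intros l _.
  rewrite (prodL_ext _ (fun j => if Nat.eqb j i then (if nth i l false then 1 else 0) else 1))
    by (intros j _; unfold f; destruct (Nat.eqb_spec j i); subst; auto).
  rewrite prodL_factor_out, (prodL_ext _ (fun _ => 1)), prodL_const, pow1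
    by (lia || (intros a _; destruct (Nat.eqb a i); auto)).
  destruct (nth i l false); lra.
Qed.

(** * Transcript probabilities as products along the transcript tree *)

Fixpoint pathw (phi : list nat -> nat -> R) (pre rest : list nat) : R :=
  match rest with
  | [] => 1
  | m :: r => phi pre m * pathw phi (pre ++ [m]) r
  end.

Lemma pathw_snoc phi pre r m : pathw phi pre (r ++ [m]) = pathw phi pre r * phi (pre ++ r) m.
Proof.
  revert pre; induction r as [|a r IH]; intros pre; simpl.
  - rewrite app_nil_r; lra.
  - rewrite IH, <- app_assoc. simpl. lra.
Qed.

Lemma pathw_mult phi psi pre rest :
  pathw (fun q m => phi q m * psi q m) pre rest = pathw phi pre rest * pathw psi pre rest.
Proof. revert pre; induction rest as [|m r IH]; intros pre; simpl; [lra|]. rewrite IH; lra. Qed.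

Lemma pathw_prodL (F : nat -> list nat -> nat -> R) (I : list nat) pre rest :
  pathw (fun q m => prodL (fun i => F i q m) I) pre rest = prodL (fun i => pathw (F i) pre rest) I.
Proof.
  revert pre; induction rest as [|m r IH]; intros pre; simpl.
  - rewrite prodL_const, pow1. reflexivity.
  - rewrite IH, <- prodL_mult. reflexivity.
Qed.

Lemma pathw_nonneg phi pre rest :
  (forall q m, 0 <= phi q m) -> 0 <= pathw phi pre rest.
Proof.
  intros H. revert pre; induction rest as [|m r IH]; intros pre; simpl; [lra|].
  apply Rmult_le_pos; auto.
Qed.

Lemma pathw_one pre rest : pathw (fun _ _ => 1) pre rest = 1.
Proof. revert pre; induction rest as [|m r IH]; intros pre; simpl; [|rewrite IH]; lra. Qed.

Lemma pathw_ext phi psi pre rest :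
  (forall q m, phi q m = psi q m) -> pathw phi pre rest = pathw psi pre rest.
Proof.
  intros H. revert pre; induction rest as [|m r IH]; intros pre; simpl; [|rewrite H, IH]; reflexivity.
Qed.

Definition stepw (P : protocol) (x : nat) (l : list bool) (pre : list nat) (m : nat) : R :=
  match paction P pre with
  | None => 0
  | Some (i, M, pq, px) => if Nat.ltb m M then (if nth i l false then px x m else pq m) else 0
  end.

Definition stopw (P : protocol) (t : list nat) : R :=
  match paction P t with None => 1 | Some _ => 0 end.

Lemma tprob_pathw P x l pre rest :
  tprob P x l pre rest = pathw (stepw P x l) pre rest * stopw P (pre ++ rest).
Proof.
  revert pre; induction rest as [|m r IH]; intros pre; simpl.
  - rewrite app_nil_r. unfold stopw. lra.
  - rewrite IH, <- app_assoc. unfold stepw. simpl.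
    destruct (paction P pre) as [[[[i M] pq] px]|]; lra.
Qed.

(** Expectation along the transcript tree: if [E] equals [1] at stopped
    transcripts and is "harmonic" for the one-step weights [stepw * phi], then
    the [phi]-weighted mass of the full transcripts extending [pre] is [E pre]
    (times the weight of [pre] itself). *)
Lemma expect_transcripts_from P x l (phi : list nat -> nat -> R) (E : list nat -> R) :
  (forall t, (plen P <= length t)%nat -> paction P t = None) ->
  (forall pre, paction P pre = None -> E pre = 1) ->
  (forall pre i M pq px, paction P pre = Some (i, M, pq, px) ->
     sumL (fun m => stepw P x l pre m * phi pre m * E (pre ++ [m])) (seq 0 M) = E pre) ->
  forall f pre, (plen P <= length pre + f)%nat ->
  sumL (fun t => tprob P x l [] t * pathw phi [] t) (transcripts_from P f pre)
  = pathw (stepw P x l) [] pre * pathw phi [] pre * E pre.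
Proof.
  intros Hlen Hstop Hharm. induction f as [|f IH]; intros pre Hf; simpl.
  - assert (Hn : paction P pre = None) by (apply Hlen; lia).
    rewrite Hn. unfold sumL; simpl. rewrite tprob_pathw, Hstop by auto.
    unfold stopw; simpl; rewrite Hn. lra.
  - destruct (paction P pre) as [[[[i M] pq] px]|] eqn:Ha.
    + rewrite sumL_flat_map.
      rewrite (sumL_ext _ (fun m => pathw (stepw P x l) [] pre * pathw phi [] pre *
                 (stepw P x l pre m * phi pre m * E (pre ++ [m])))).
      * rewrite sumL_scal, (Hharm pre i M pq px Ha). lra.
      * intros m _. rewrite IH by (rewrite length_app; simpl; lia).
        rewrite !pathw_snoc. simpl. lra.
    + unfold sumL; simpl. rewrite tprob_pathw, Hstop by auto.
      unfold stopw; simpl; rewrite Ha. lra.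
Qed.

Lemma tprob_total n K P x l : wf_protocol n K P -> (x < K)%nat ->
  sumL (tprob P x l []) (transcripts P) = 1.
Proof.
  intros [Hlen Hstep] Hx.
  rewrite (sumL_ext _ (fun t => tprob P x l [] t * pathw (fun _ _ => 1) [] t))
    by (intros t _; rewrite pathw_one; lra).
  unfold transcripts. rewrite (expect_transcripts_from P x l _ (fun _ => 1)); auto.
  - simpl. lra.
  - intros pre i M pq px Ha. destruct (Hstep _ _ _ _ _ Ha) as (_ & [_ Hq] & Hp).
    unfold stepw; rewrite Ha.
    rewrite (sumL_ext _ (fun m => if nth i l false then px x m else pq m)).
    + destruct (nth i l false); [apply (Hp x Hx) | apply Hq].
    + intros m Hm. apply in_seq in Hm.
      replace (Nat.ltb m M) with true by (symmetry; apply Nat.ltb_lt; lia). lra.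
Qed.

(** * The rectangle property of collaborating protocols *)

Definition facstep (P : protocol) (x i : nat) (bb : bool) (pre : list nat) (m : nat) : R :=
  match paction P pre with
  | None => 1
  | Some (j, M, pq, px) => if Nat.eqb j i then (if bb then px x m else pq m) else 1
  end.

Definition fac (P : protocol) (x i : nat) (bb : bool) (pre rest : list nat) : R :=
  pathw (facstep P x i bb) pre rest.

Definition legalstep (P : protocol) (pre : list nat) (m : nat) : R :=
  match paction P pre with
  | None => 0
  | Some (_, M, _, _) => if Nat.ltb m M then 1 else 0
  end.

Definition legalw (P : protocol) (t : list nat) : R := pathw (legalstep P) [] t * stopw P t.

Lemma legalw_nonneg P t : 0 <= legalw P t.
Proof.
  unfold legalw, stopw. apply Rmult_le_pos; [|destruct (paction P t); lra].
  apply pathw_nonneg. intros q m. unfold legalstep.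
  destruct (paction P q) as [[[[j M] pq] px]|]; [destruct (Nat.ltb m M)|]; lra.
Qed.

Lemma tprob_factor n K P x l t : wf_protocol n K P ->
  tprob P x l [] t = legalw P t * prodL (fun i => fac P x i (nth i l false) [] t) (seq 0 n).
Proof.
  intros [_ Hstep]. rewrite tprob_pathw. unfold legalw, fac. rewrite <- pathw_prodL. simpl.
  rewrite (pathw_ext (stepw P x l)
    (fun q m => legalstep P q m * prodL (fun i => facstep P x i (nth i l false) q m) (seq 0 n))).
  - rewrite pathw_mult. lra.
  - intros q m. unfold stepw, legalstep, facstep.
    destruct (paction P q) as [[[[j M] pq] px]|] eqn:Ha; [|lra].
    destruct (Hstep _ _ _ _ _ Ha) as [Hj _].
    rewrite (prodL_one_index (fun i => if nth i l false then px x m else pq m)) by lia.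
    destruct (Nat.ltb m M); lra.
Qed.

Definition gfac (b : R) (P : protocol) (x : nat) (t : list nat) (j : nat) : R :=
  bexp b (fun bb => fac P x j bb [] t).

Definition others (b : R) (P : protocol) (x : nat) (t : list nat) (n i : nat) : R :=
  legalw P t * prodL (fun j => if Nat.eqb j i then 1 else gfac b P x t j) (seq 0 n).

Lemma prT_as_sum n b P x t :
  prT n b P x t = sumL (fun l => indep_prob b l * tprob P x l [] t) (allbools n).
Proof. reflexivity. Qed.

Lemma prT_Li_as_sum n b P i x t :
  prT_Li n b P i x t =
  sumL (fun l => if nth i l false then indep_prob b l * tprob P x l [] t else 0) (allbools n).
Proof. reflexivity. Qed.

Section Rectangle.
Variables (n K : nat) (b : R) (P : protocol) (x : nat) (t : list nat).
Hypothesis Hwf : wf_protocol n K P.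

Lemma prT_factor : prT n b P x t = legalw P t * prodL (gfac b P x t) (seq 0 n).
Proof.
  rewrite prT_as_sum.
  rewrite (sumL_ext _ (fun l => legalw P t * (indep_prob b l *
      prodL (fun j => (fun j bb => fac P x j bb [] t) j (nth j l false)) (seq 0 n)))).
  - rewrite sumL_scal, (indep_expect_prod b n (fun j bb => fac P x j bb [] t)). reflexivity.
  - intros l _. rewrite (tprob_factor n K) by auto. lra.
Qed.

(** Bayes' rule for player [i]: [Pr(T = t)] and [Pr(T = t, L_i = 1)] share
    the factors of the other players, so the posterior of [L_i] only depends
    on player [i]'s own factors. *)
Lemma prT_split_player i : (i < n)%nat ->
  prT n b P x t = others b P x t n i * gfac b P x t i /\
  prT_Li n b P i x t = others b P x t n i * (b * fac P x i true [] t).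
Proof.
  intros Hi. unfold others. split.
  - rewrite prT_factor.
    rewrite (prodL_ext (gfac b P x t) (fun j => if Nat.eqb j i then gfac b P x t i else gfac b P x t j))
      by (intros j _; destruct (Nat.eqb_spec j i); subst; auto).
    rewrite prodL_factor_out by lia. lra.
  - rewrite prT_Li_as_sum.
    set (f := fun (j : nat) (bb : bool) =>
                if Nat.eqb j i then (if bb then fac P x i true [] t else 0) else fac P x j bb [] t).
    rewrite (sumL_ext _ (fun l => legalw P t *
        (indep_prob b l * prodL (fun j => f j (nth j l false)) (seq 0 n)))).
    + rewrite sumL_scal, (indep_expect_prod b n f).
      rewrite (prodL_ext _ (fun j => if Nat.eqb j i then b * fac P x i true [] t else gfac b P x t j))
        by (intros j _; unfold f, gfac, bexp; destruct (Nat.eqb_spec j i); [subst; lra|reflexivity]).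
      rewrite prodL_factor_out by lia. lra.
    + intros l _. rewrite (tprob_factor n K) by auto.
      rewrite (prodL_ext (fun j => f j (nth j l false))
                 (fun j => if Nat.eqb j i then (if nth i l false then fac P x i true [] t else 0)
                           else fac P x j (nth j l false) [] t))
        by (intros j _; unfold f; destruct (Nat.eqb_spec j i); subst; reflexivity).
      destruct (nth i l false) eqn:Eli.
      * rewrite (prodL_ext (fun j => if Nat.eqb j i then (if true then fac P x i true [] t else 0)
                                      else fac P x j (nth j l false) [] t)
                           (fun j => fac P x j (nth j l false) [] t)); [lra|].
        intros j _. destruct (Nat.eqb_spec j i); subst; [rewrite Eli|]; reflexivity.
      * rewrite prodL_factor_out by lia. lra.
Qed.

Hypothesis Hx : (x < K)%nat.
Hypothesis Hb : 0 <= b <= 1.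

Lemma fac_nonneg i bb pre rest : 0 <= fac P x i bb pre rest.
Proof.
  apply pathw_nonneg. intros q m. unfold facstep.
  destruct (paction P q) as [[[[j M] pq] px]|] eqn:Ha; [|lra].
  destruct Hwf as [_ Hstep]. destruct (Hstep _ _ _ _ _ Ha) as (_ & [Hq _] & Hp).
  destruct (Nat.eqb j i), bb; [apply (Hp x Hx) | apply Hq | lra | lra].
Qed.

Lemma gfac_nonneg j : 0 <= gfac b P x t j.
Proof.
  unfold gfac, bexp. pose proof (fac_nonneg j true [] t). pose proof (fac_nonneg j false [] t). nra.
Qed.

Lemma others_nonneg i : 0 <= others b P x t n i.
Proof.
  apply Rmult_le_pos; [apply legalw_nonneg|]. apply prodL_nonneg.
  intros j _. destruct (Nat.eqb j i); [lra | apply gfac_nonneg].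
Qed.

Lemma prT_nonneg : 0 <= prT n b P x t.
Proof.
  rewrite prT_factor. apply Rmult_le_pos; [apply legalw_nonneg|].
  apply prodL_nonneg; intros; apply gfac_nonneg.
Qed.

Lemma prT_Li_bounds i : (i < n)%nat -> 0 <= prT_Li n b P i x t <= prT n b P x t.
Proof.
  intros Hi. destruct (prT_split_player i Hi) as [E1 E2]. rewrite E1, E2.
  pose proof (others_nonneg i). pose proof (fac_nonneg i true [] t).
  pose proof (fac_nonneg i false [] t). unfold gfac, bexp.
  assert (0 <= b * fac P x i true [] t) by nra.
  assert (0 <= (1 - b) * fac P x i false [] t) by nra.
  split; nra.
Qed.

End Rectangle.

Lemma prT_total n K b P x : wf_protocol n K P -> (x < K)%nat ->
  sumL (prT n b P x) (transcripts P) = 1.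
Proof.
  intros Hw Hx. rewrite (sumL_ext _ _ _ (fun t _ => prT_as_sum n b P x t)), sumL_swap.
  rewrite <- (indep_total b n). apply sumL_ext. intros l _.
  rewrite sumL_scal, (tprob_total n K P x l Hw Hx). lra.
Qed.

Lemma prT_Li_total n K b P i x : wf_protocol n K P -> (x < K)%nat -> (i < n)%nat ->
  sumL (prT_Li n b P i x) (transcripts P) = b.
Proof.
  intros Hw Hx Hi. rewrite (sumL_ext _ _ _ (fun t _ => prT_Li_as_sum n b P i x t)), sumL_swap.
  transitivity (sumL (fun l => if nth i l false then indep_prob b l else 0) (allbools n));
    [| apply indep_marginal; auto].
  apply sumL_ext. intros l _.
  destruct (nth i l false); cbv beta iota.
  - rewrite sumL_scal, (tprob_total n K P x l Hw Hx). lra.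
  - rewrite sumL_const. lra.
Qed.

(** * Elementary analytic inequalities *)

Lemma ln_le_sub1 y : 0 < y -> ln y <= y - 1.
Proof. intros Hy. pose proof (exp_ineq1_le (ln y)) as H. rewrite exp_ln in H; lra. Qed.

Lemma ln_le x y : 0 < x -> x <= y -> ln x <= ln y.
Proof.
  intros Hx Hxy. destruct (Rle_lt_or_eq_dec _ _ Hxy) as [H|H]; [left; apply ln_increasing|subst]; lra.
Qed.

Lemma ln_neg y : 0 < y < 1 -> ln y < 0.
Proof. intros Hy. rewrite <- ln_1. apply ln_increasing; lra. Qed.

Lemma exp_INR_pow n v : exp (INR n * v) = exp v ^ n.
Proof.
  induction n as [|n IH]; [simpl; rewrite Rmult_0_l, exp_0; reflexivity|].
  rewrite S_INR. simpl pow. rewrite <- IH, <- exp_plus. f_equal. ring.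
Qed.

Lemma exp_convex lam a : 0 <= lam <= 1 -> exp (lam * a) <= (1 - lam) + lam * exp a.
Proof.
  intros Hl. pose proof (exp_pos (lam * a)).
  assert (E1 : exp (lam * a) * exp (- (lam * a)) = 1) by (rewrite <- exp_plus, Rplus_opp_r; apply exp_0).
  assert (E2 : exp (lam * a) * exp ((1 - lam) * a) = exp a) by (rewrite <- exp_plus; f_equal; ring).
  assert (exp (lam * a) * (1 - lam * a) <= 1).
  { rewrite <- E1. apply Rmult_le_compat_l; [lra|]. pose proof (exp_ineq1_le (- (lam * a))). lra. }
  assert (exp (lam * a) * (1 + (1 - lam) * a) <= exp a).
  { rewrite <- E2. apply Rmult_le_compat_l; [lra|]. apply exp_ineq1_le. }
  nra.
Qed.

Lemma exp_convex_strict lam a : 0 < lam < 1 -> a <> 0 -> exp (lam * a) < (1 - lam) + lam * exp a.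
Proof.
  intros Hl Ha. pose proof (exp_pos (lam * a)).
  assert (E1 : exp (lam * a) * exp (- (lam * a)) = 1) by (rewrite <- exp_plus, Rplus_opp_r; apply exp_0).
  assert (E2 : exp (lam * a) * exp ((1 - lam) * a) = exp a) by (rewrite <- exp_plus; f_equal; ring).
  assert (exp (lam * a) * (1 - lam * a) < 1).
  { rewrite <- E1. apply Rmult_lt_compat_l; [lra|].
    pose proof (exp_ineq1 (- (lam * a)) ltac:(intro E; apply Ha; nra)). lra. }
  assert (exp (lam * a) * (1 + (1 - lam) * a) < exp a).
  { rewrite <- E2. apply Rmult_lt_compat_l; [lra|]. apply exp_ineq1. intro E; apply Ha; nra. }
  nra.
Qed.

(** The slope of the chord of [q |-> - ln (1 - q)] on [[0, c]]. *)
Definition kappa (c : R) : R := - ln (1 - c) / c.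

Lemma neg_ln_chord q c : 0 <= q <= c -> 0 < c < 1 -> - ln (1 - q) <= kappa c * q.
Proof.
  intros Hq Hc. set (lam := q / c).
  assert (Hlc : lam * c = q) by (unfold lam; field; lra).
  assert (Hl : 0 <= lam <= 1) by (split; nra).
  pose proof (exp_convex lam (ln (1 - c)) Hl) as H. rewrite exp_ln in H by lra.
  replace ((1 - lam) + lam * (1 - c)) with (1 - q) in H by (unfold lam; field; lra).
  apply ln_le in H; [|apply exp_pos]. rewrite ln_exp in H.
  unfold kappa. replace (- ln (1 - c) / c * q) with (- (lam * ln (1 - c))) by (unfold lam; field; lra).
  lra.
Qed.

Lemma capacity_pos b c : 0 < b -> b < c -> c < 1 -> 0 < ln (1 - b) + kappa c * b.
Proof.
  intros Hb Hbc Hc. set (lam := b / c).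
  assert (Hlc : lam * c = b) by (unfold lam; field; lra).
  assert (Hl : 0 < lam < 1) by (split; nra).
  pose proof (ln_neg (1 - c) ltac:(lra)) as Hneg.
  pose proof (exp_convex_strict lam (ln (1 - c)) Hl ltac:(lra)) as H. rewrite exp_ln in H by lra.
  replace ((1 - lam) + lam * (1 - c)) with (1 - b) in H by (unfold lam; field; lra).
  apply ln_increasing in H; [|apply exp_pos]. rewrite ln_exp in H.
  unfold kappa. replace (- ln (1 - c) / c * b) with (- (lam * ln (1 - c))) by (unfold lam; field; lra).
  lra.
Qed.

Lemma gibbs_point p q g : 0 <= p -> 0 <= q -> (0 < p -> 0 < q) -> 0 < g ->
  p * ln g - p * ln 2 - g * q / 2 + p <= p * ln (p / q).
Proof.
  intros Hp Hq Hpq Hg. destruct (Req_dec p 0) as [E|E].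
  - subst. assert (0 <= g * q) by (apply Rmult_le_pos; lra). lra.
  - assert (Hp' : 0 < p) by lra. specialize (Hpq Hp').
    assert (Hy : 0 < g * q / (2 * p)) by (apply Rdiv_lt_0_compat; nra).
    assert (Ey : ln (g * q / (2 * p)) = ln g + ln q - (ln 2 + ln p)).
    { unfold Rdiv. rewrite ln_mult, ln_mult, ln_Rinv, ln_mult;
        try apply Rinv_0_lt_compat; try nra. }
    assert (Epq : ln (p / q) = ln p - ln q).
    { unfold Rdiv. rewrite ln_mult, ln_Rinv; try apply Rinv_0_lt_compat; lra. }
    assert (Ep : p * (g * q / (2 * p)) = g * q / 2) by (field; lra).
    pose proof (ln_le_sub1 _ Hy) as H. rewrite Ey in H. rewrite Epq.
    apply (Rmult_le_compat_l p) in H; lra.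
Qed.

(** * The size of the secret space *)

Lemma Rceil_bounds h : h <= IZR (Rceil h) < h + 1.
Proof. unfold Rceil. rewrite opp_IZR. destruct (base_Int_part (- h)). lra. Qed.

Lemma Xsize_INR h : INR (Xsize h) = 2 ^ Z.to_nat (Rceil h).
Proof. unfold Xsize. rewrite pow_INR. reflexivity. Qed.

Lemma Xsize_pos h : (0 < Xsize h)%nat.
Proof. unfold Xsize. pose proof (Nat.pow_nonzero 2 (Z.to_nat (Rceil h))). lia. Qed.

Lemma ln_Xsize_ge h : h * ln 2 <= ln (INR (Xsize h)).
Proof.
  rewrite Xsize_INR, ln_pow by lra. pose proof ln_lt_2. apply Rmult_le_compat_r; [lra|].
  destruct (Rceil_bounds h) as [Hge _]. destruct (Z_le_gt_dec 0 (Rceil h)) as [H0|H0].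
  - rewrite INR_IZR_INZ, Z2Nat.id by auto. auto.
  - apply Z.gt_lt, IZR_lt in H0. pose proof (pos_INR (Z.to_nat (Rceil h))). lra.
Qed.

Lemma Xsize_le h : 0 <= h -> INR (Xsize h) <= 2 * exp (h * ln 2).
Proof.
  intros Hh. destruct (Rceil_bounds h) as [Hge Hlt].
  assert (H0 : (0 <= Rceil h)%Z) by (apply le_IZR; lra).
  assert (Hk : INR (Z.to_nat (Rceil h)) < h + 1) by (rewrite INR_IZR_INZ, Z2Nat.id; auto).
  rewrite Xsize_INR, <- (exp_ln (2 ^ _)) by (apply pow_lt; lra). rewrite ln_pow by lra.
  replace (2 * exp (h * ln 2)) with (exp ((h + 1) * ln 2))
    by (rewrite Rmult_plus_distr_r, exp_plus, Rmult_1_l, exp_ln; lra).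
  left. apply exp_increasing. pose proof ln_lt_2. apply Rmult_lt_compat_r; lra.
Qed.

(** * Converse: safe protocols cannot exceed the capacity *)

Lemma tprob_ignorant P x y pre rest : tprob P x [] pre rest = tprob P y [] pre rest.
Proof.
  revert pre; induction rest as [|m r IH]; intros pre; simpl; [reflexivity|].
  destruct (paction P pre) as [[[[j M] pq] px]|]; [|reflexivity].
  rewrite IH. destruct j; reflexivity.
Qed.

Lemma safe_player_factors n K b c P x t i :
  wf_protocol n K P -> (x < K)%nat -> 0 <= b <= 1 -> (i < n)%nat ->
  0 < prT n b P x t -> posterior n b P i x t <= c ->
  0 < gfac b P x t i /\ b * fac P x i true [] t <= c * gfac b P x t i /\
  prT_Li n b P i x t = prT n b P x t * (b * fac P x i true [] t / gfac b P x t i).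
Proof.
  intros Hw Hx Hb Hi Hp Hpost.
  destruct (prT_split_player n K b P x t Hw i Hi) as [E1 E2].
  pose proof (others_nonneg n K b P x t Hw Hx Hb i) as HO.
  pose proof (gfac_nonneg n K b P x t Hw Hx Hb i) as Hg.
  set (O := others b P x t n i) in *. set (g := gfac b P x t i) in *.
  assert (HO' : 0 < O) by (destruct (Req_dec O 0) as [E|E]; [rewrite E1, E in Hp|]; lra).
  assert (Hg' : 0 < g) by (destruct (Req_dec g 0) as [E|E]; [rewrite E1, E in Hp|]; lra).
  unfold posterior in Hpost. rewrite E1, E2 in Hpost |- *.
  replace (O * (b * fac P x i true [] t) / (O * g)) with (b * fac P x i true [] t / g)
    in Hpost by (field; lra).
  repeat split; [lra| |field; lra].
  apply (Rmult_le_compat_r g) in Hpost; [|lra].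
  unfold Rdiv in Hpost. rewrite Rmult_assoc, Rinv_l, Rmult_1_r in Hpost by lra. lra.
Qed.

(** One player's contribution to the divergence: with posterior
    [q = b F1 / g <= c] one has [g / F0 = (1 - b) / (1 - q)], hence
    [ln (g / F0) <= ln (1 - b) + kappa c * q]. *)
Lemma player_log_ratio_bound b c F1 F0 : 0 < b < 1 -> 0 < c < 1 -> 0 <= F1 -> 0 <= F0 ->
  0 < b * F1 + (1 - b) * F0 -> b * F1 <= c * (b * F1 + (1 - b) * F0) ->
  0 < F0 /\
  ln ((b * F1 + (1 - b) * F0) / F0) <= ln (1 - b) + kappa c * (b * F1 / (b * F1 + (1 - b) * F0)).
Proof.
  intros Hb Hc HF1 HF0 Hg Hpost. set (g := b * F1 + (1 - b) * F0) in *.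
  assert (HF0' : 0 < F0).
  { destruct (Req_dec F0 0) as [E|E]; [|lra]. unfold g in *. rewrite E in *. nra. }
  split; [exact HF0'|].
  set (q := b * F1 / g).
  assert (Hq : 0 <= q <= c).
  { unfold q. split; [apply Rmult_le_pos; [nra | left; apply Rinv_0_lt_compat; lra]|].
    apply (Rmult_le_reg_r g); [lra|]. unfold Rdiv. rewrite Rmult_assoc, Rinv_l, Rmult_1_r by lra. lra. }
  assert (Hratio : g / F0 = (1 - b) / (1 - q)) by (unfold q, g; field; split; [|unfold g in Hg]; nra).
  rewrite Hratio. unfold Rdiv at 1. rewrite ln_mult, ln_Rinv by (try apply Rinv_0_lt_compat; lra).
  pose proof (neg_ln_chord q c Hq Hc). lra.
Qed.

Lemma safe_player_log_ratio n K b c P x t j :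
  wf_protocol n K P -> (x < K)%nat -> 0 < b -> b < c -> c < 1 -> (j < n)%nat ->
  0 < prT n b P x t -> posterior n b P j x t <= c ->
  0 < gfac b P x t j /\ 0 < fac P x j false [] t /\
  prT n b P x t * ln (gfac b P x t j / fac P x j false [] t) <=
    prT n b P x t * ln (1 - b) + kappa c * prT_Li n b P j x t.
Proof.
  intros Hw Hx Hb Hbc Hc Hj Hp Hpost. assert (Hb1 : 0 <= b <= 1) by lra.
  destruct (safe_player_factors n K b c P x t j Hw Hx Hb1 Hj Hp Hpost) as (Hg & Hle & HLi).
  rewrite HLi. unfold gfac, bexp in *.
  destruct (player_log_ratio_bound b c (fac P x j true [] t) (fac P x j false [] t))
    as [HF0 Hlog]; try apply (fac_nonneg n K P x Hw Hx); auto; try lra.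
  split; [exact Hg|]. split; [exact HF0|].
  apply (Rmult_le_compat_l (prT n b P x t)) in Hlog; lra.
Qed.

(** Per-transcript divergence bound: on a safe transcript,
    [Pr(t) ln (Pr(t) / P0(t)) <= sum_i (Pr(t) ln (1 - b) + kappa c Pr(t, L_i = 1))],
    where [P0] is the transcript law when nobody knows the secret; by the
    rectangle property [Pr(t) / P0(t)] is the product of the players' ratios. *)
Lemma transcript_divergence_bound n K b c P x t :
  wf_protocol n K P -> (x < K)%nat -> 0 < b -> b < c -> c < 1 ->
  (forall i, (i < n)%nat -> 0 < prT n b P x t -> posterior n b P i x t <= c) ->
  (0 < prT n b P x t -> 0 < tprob P x [] [] t) /\
  prT n b P x t * ln (prT n b P x t / tprob P x [] [] t) <=
    sumL (fun i => prT n b P x t * ln (1 - b) + kappa c * prT_Li n b P i x t) (seq 0 n).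
Proof.
  intros Hw Hx Hb Hbc Hc Hsafe. assert (Hb1 : 0 <= b <= 1) by lra.
  set (p := prT n b P x t).
  destruct (Req_dec p 0) as [Z|NZ].
  { split; [intros Hp; lra|]. rewrite Z, Rmult_0_l. apply sumL_nonneg. intros i Hi.
    apply in_seq in Hi. pose proof (prT_Li_bounds n K b P x t Hw Hx Hb1 i ltac:(lia)) as Hi'.
    fold p in Hi'. rewrite Z in Hi'. replace (prT_Li n b P i x t) with 0 by lra. lra. }
  assert (Hp : 0 < p) by (pose proof (prT_nonneg n K b P x t Hw Hx Hb1); fold p in H; lra).
  assert (Hplayer : forall j, In j (seq 0 n) -> _)
    by (intros j Hj; apply in_seq in Hj;
        exact (safe_player_log_ratio n K b c P x t j Hw Hx Hb Hbc Hc ltac:(lia) Hp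
                 (Hsafe j ltac:(lia) Hp))).
  assert (HP0 : tprob P x [] [] t = legalw P t * prodL (fun j => fac P x j false [] t) (seq 0 n)).
  { rewrite (tprob_factor n K) by auto. f_equal. apply prodL_ext. intros j _. destruct j; reflexivity. }
  pose proof (prT_factor n K b P x t Hw) as HT. fold p in HT.
  assert (HF0 : 0 < prodL (fun j => fac P x j false [] t) (seq 0 n))
    by (apply prodL_pos; intros j Hj; apply Hplayer; auto).
  assert (HO : 0 < legalw P t).
  { pose proof (legalw_nonneg P t). destruct (Req_dec (legalw P t) 0) as [E|E]; [|lra].
    rewrite E in HT. lra. }
  split; [intros _; rewrite HP0; apply Rmult_lt_0_compat; auto|].
  assert (Hratio : p / tprob P x [] [] t =
                   prodL (fun j => gfac b P x t j / fac P x j false [] t) (seq 0 n)).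
  { rewrite HT, HP0, <- prodL_div by (intros j Hj; apply Hplayer; auto). field; lra. }
  rewrite Hratio, ln_prodL by (intros j Hj; apply Rdiv_lt_0_compat; apply Hplayer; auto).
  rewrite <- sumL_scal. apply sumL_le. intros j Hj. apply Hplayer; auto.
Qed.

Lemma divergence_upper_bound n K b c P x :
  wf_protocol n K P -> (x < K)%nat -> 0 < b -> b < c -> c < 1 ->
  (forall i t, (i < n)%nat -> 0 < prT n b P x t -> posterior n b P i x t <= c) ->
  sumL (fun t => prT n b P x t * ln (prT n b P x t / tprob P x [] [] t)) (transcripts P)
  <= INR n * (ln (1 - b) + kappa c * b).
Proof.
  intros Hw Hx Hb Hbc Hc Hsafe. eapply Rle_trans.
  - apply sumL_le. intros t _. apply (transcript_divergence_bound n K b c P x t); auto.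
  - rewrite sumL_swap.
    replace (INR n * (ln (1 - b) + kappa c * b))
      with (sumL (fun _ => ln (1 - b) + kappa c * b) (seq 0 n))
      by (rewrite sumL_const, length_seq; reflexivity).
    apply Req_le.
    apply sumL_ext. intros i Hi. apply in_seq in Hi.
    rewrite sumL_plus, (sumL_ext _ (fun t => ln (1 - b) * prT n b P x t)) by (intros; lra).
    rewrite !sumL_scal, (prT_total n K b P x Hw Hx), (prT_Li_total n K b P i x Hw Hx) by lia.
    lra.
Qed.

(** This is the
    Gibbs inequality summed with the test function [g = K] on [G], [1] off [G]. *)
Lemma divergence_event_bound {A : Type} (p q : A -> R) (G : A -> bool) (T : list A) (K eps : R) :
  (forall t, In t T -> 0 <= p t) -> (forall t, In t T -> 0 <= q t) ->
  (forall t, In t T -> 0 < p t -> 0 < q t) ->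
  sumL p T = 1 -> sumL q T <= 1 -> 1 <= K ->
  1 - eps <= sumL (fun t => if G t then p t else 0) T ->
  K * sumL (fun t => if G t then q t else 0) T <= 1 ->
  (1 - eps) * ln K - ln 2 <= sumL (fun t => p t * ln (p t / q t)) T.
Proof.
  intros Hp Hq Hpq Hsp Hsq HK Hgood Hbad.
  assert (HlnK : 0 <= ln K) by (rewrite <- ln_1; apply ln_le; lra).
  set (pG := fun t => if G t then p t else 0). set (qG := fun t => if G t then q t else 0).
  assert (Hterm : forall t, In t T ->
    ln K * pG t + (- (K / 2)) * qG t + (- / 2) * q t + (1 - ln 2) * p t <= p t * ln (p t / q t)).
  { intros t Ht. pose proof (gibbs_point (p t) (q t) (if G t then K else 1)
      (Hp t Ht) (Hq t Ht) (Hpq t Ht) ltac:(destruct (G t); lra)) as Hg.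
    pose proof (Hq t Ht). unfold pG, qG. destruct (G t); [nra|]. rewrite ln_1 in Hg. lra. }
  apply sumL_le in Hterm. rewrite !sumL_plus, !sumL_scal, Hsp in Hterm.
  fold pG in Hgood. fold qG in Hbad.
  apply (Rmult_le_compat_l (ln K)) in Hgood; [|lra]. nra.
Qed.

Lemma decoding_pigeonhole {A : Type} (q : A -> R) (T : list A) (D : A -> nat)
  (G : nat -> A -> bool) (K : nat) :
  (0 < K)%nat -> (forall t, In t T -> 0 <= q t) -> sumL q T <= 1 ->
  (forall x t, G x t = true -> D t = x) ->
  exists x, (x < K)%nat /\ INR K * sumL (fun t => if G x t then q t else 0) T <= 1.
Proof.
  intros HK Hq Hsq HGD. apply NNPP. intros Hnone.
  set (S := fun x => sumL (fun t => if G x t then q t else 0) T).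
  assert (HKr : 0 < INR K) by (apply lt_0_INR; lia).
  assert (Hall : forall x, In x (seq 0 K) -> 1 / INR K < S x).
  { intros x Hx. apply in_seq in Hx. apply Rnot_le_lt. intros Hle. apply Hnone. exists x.
    split; [lia|]. apply (Rmult_le_compat_l (INR K)) in Hle; [|lra].
    replace (INR K * (1 / INR K)) with 1 in Hle by (field; lra). exact Hle. }
  apply sumL_lt in Hall; [|destruct K; [lia|discriminate]].
  rewrite sumL_const, length_seq in Hall. replace (INR K * (1 / INR K)) with 1 in Hall by (field; lra).
  unfold S in Hall. rewrite sumL_swap in Hall.
  assert (sumL (fun t => sumL (fun x => if G x t then q t else 0) (seq 0 K)) T <= sumL q T).
  { apply sumL_le. intros t Ht. eapply Rle_trans; [apply sumL_le | apply (sumL_delta_le (D t)), Hq, Ht].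
    intros x _. specialize (HGD x t). pose proof (Hq t Ht).
    destruct (G x t); [rewrite HGD, Nat.eqb_refl by auto|destruct (Nat.eqb (D t) x)]; lra. }
  lra.
Qed.

Lemma good_decodes n b c P D x t : good n b c P D x t = true -> D t = x.
Proof. unfold good. intros H. apply andb_prop in H as [_ H]. apply Nat.eqb_eq, H. Qed.

Lemma safe_protocol_converse n h b c eps P D : 0 < b -> b < c -> c < 1 ->
  safe_protocol n h b c eps P D ->
  (1 - eps) * ln (INR (Xsize h)) - ln 2 <= INR n * (ln (1 - b) + kappa c * b).
Proof.
  intros Hb Hbc Hc [[Hw [_ Hsucc]] Hsafe]. set (K := Xsize h) in *.
  assert (HK : (0 < K)%nat) by apply Xsize_pos.
  set (P0 := tprob P 0 [] []).
  assert (HP0 : forall t, 0 <= P0 t).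
  { intros t. unfold P0. rewrite (tprob_factor n K) by eauto. apply Rmult_le_pos;
      [apply legalw_nonneg | apply prodL_nonneg; intros; apply (fac_nonneg n K P 0 Hw HK)]. }
  assert (HsP0 : sumL P0 (transcripts P) = 1) by (apply (tprob_total n K); auto).
  destruct (decoding_pigeonhole P0 (transcripts P) D (good n b c P D) K HK (fun t _ => HP0 t)
              ltac:(lra) (good_decodes n b c P D)) as [x [Hx Hbad]].
  assert (Hsafe_x : forall i t, (i < n)%nat -> 0 < prT n b P x t -> posterior n b P i x t <= c)
    by (intros; apply Hsafe; auto).
  assert (HP0x : forall t, tprob P x [] [] t = P0 t) by (intros; apply tprob_ignorant).
  pose proof (divergence_upper_bound n K b c P x Hw Hx Hb Hbc Hc Hsafe_x) as Hup.
  rewrite (sumL_ext _ (fun t => prT n b P x t * ln (prT n b P x t / P0 t)))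
    in Hup by (intros; rewrite HP0x; reflexivity).
  assert (Hlow : (1 - eps) * ln (INR K) - ln 2 <=
                 sumL (fun t => prT n b P x t * ln (prT n b P x t / P0 t)) (transcripts P)).
  { apply divergence_event_bound with (G := good n b c P D x); auto.
    - intros; apply (prT_nonneg n K b P x t Hw Hx); lra.
    - intros t _ Hpos. rewrite <- HP0x.
      apply (transcript_divergence_bound n K b c P x t); auto.
    - apply (prT_total n K b P x Hw Hx).
    - lra.
    - apply (le_INR 1); lia.
    - apply (Hsucc x Hx). }
  lra.
Qed.

Lemma safely_achievable_le b c Rt : 0 < b -> b < c -> c < 1 ->
  safely_achievable b c Rt -> Rt * ln 2 <= ln (1 - b) + kappa c * b.
Proof.
  intros Hb Hbc Hc Hach. set (C := ln (1 - b) + kappa c * b).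
  pose proof (capacity_pos b c Hb Hbc Hc) as HC. fold C in HC.
  assert (Hln2 : 0 < ln 2) by (pose proof ln_lt_2; lra).
  apply Rnot_lt_le. intros Hgt. set (r := Rt * ln 2) in *.
  set (eps := (r - C) / (2 * r)).
  assert (Heps : 0 < eps) by (apply Rdiv_lt_0_compat; lra).
  destruct (INR_unbounded (2 * ln 2 / (r - C))) as [n0 Hn0].
  destruct (Hach eps Heps n0) as [n [Hn [P [D Hprot]]]].
  pose proof (safe_protocol_converse n (INR n * Rt) b c eps P D Hb Hbc Hc Hprot) as Hconv.
  fold C in Hconv. pose proof (ln_Xsize_ge (INR n * Rt)) as HX.
  assert (Heps1 : 1 - eps = (r + C) / (2 * r)) by (unfold eps; field; lra).
  assert (H1 : (1 - eps) * (INR n * r) <= (1 - eps) * ln (INR (Xsize (INR n * Rt)))).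
  { apply Rmult_le_compat_l; [rewrite Heps1; apply Rmult_le_pos; [|left; apply Rinv_0_lt_compat]; lra|].
    unfold r. lra. }
  assert (H2 : (1 - eps) * (INR n * r) = INR n * ((r + C) / 2)) by (rewrite Heps1; field; lra).
  assert (Hn0' : INR n0 <= INR n) by (apply le_INR; lia).
  assert (H3 : 2 * ln 2 / (r - C) * (r - C) = 2 * ln 2) by (field; lra).
  assert (H4 : INR n * (r - C) <= 2 * ln 2) by lra.
  assert (H5 : 2 * ln 2 < INR n * (r - C)) by (rewrite <- H3; apply Rmult_lt_compat_r; lra).
  lra.
Qed.

(** * Achievability *)

Lemma expect_prT n b P x (Phi : list nat -> R) :
  sumL (fun t => prT n b P x t * Phi t) (transcripts P) =
  sumL (fun l => indep_prob b l * sumL (fun t => tprob P x l [] t * Phi t) (transcripts P))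
       (allbools n).
Proof.
  rewrite (sumL_ext _ (fun t => sumL (fun l => indep_prob b l * (tprob P x l [] t * Phi t))
                                      (allbools n))).
  - rewrite sumL_swap. apply sumL_ext. intros l _. apply sumL_scal.
  - intros t _. rewrite prT_as_sum, Rmult_comm, <- sumL_scal. apply sumL_ext. intros; lra.
Qed.

Definition bern (s : R) (m : nat) : R :=
  if Nat.eqb m 0 then 1 - s else if Nat.eqb m 1 then s else 0.

(** A knowing player's bit about candidate [y]: [1] iff [X = y]; otherwise
    the same Bernoulli([s]) bit as an ignorant player. *)
Definition vote (s : R) (y : nat) (x m : nat) : R :=
  if Nat.eqb x y then (if Nat.eqb m 1 then 1 else 0) else bern s m.

(** The achieving protocol: [n K] rounds; in round [k], player [k / K] sends
    one bit about the candidate secret [k mod K]. *)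
Definition ach (n K : nat) (s : R) : protocol :=
  Protocol (n * K)%nat (fun t => if Nat.ltb (length t) (n * K)%nat
                              then Some ((length t / K)%nat, 2%nat, bern s, vote s (length t mod K)%nat)
                              else None).

Lemma sumL_two (f : nat -> R) : sumL f (seq 0 2) = f 0%nat + f 1%nat.
Proof. unfold sumL; simpl. lra. Qed.

Lemma bern_0 s : bern s 0 = 1 - s. Proof. reflexivity. Qed.
Lemma bern_1 s : bern s 1 = s. Proof. reflexivity. Qed.
Lemma vote_0 s y x : vote s y x 0 = if Nat.eqb x y then 0 else 1 - s.
Proof. unfold vote. destruct (Nat.eqb x y); reflexivity. Qed.
Lemma vote_1 s y x : vote s y x 1 = if Nat.eqb x y then 1 else s.
Proof. unfold vote. destruct (Nat.eqb x y); reflexivity. Qed.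

Lemma ach_wf n K s : (0 < K)%nat -> 0 <= s <= 1 -> wf_protocol n K (ach n K s).
Proof.
  intros HK Hs. split.
  - intros t Ht. simpl in *. destruct (Nat.ltb_spec (length t) (n * K)); [lia|auto].
  - intros t i M pq px Ha. simpl in Ha. destruct (Nat.ltb_spec (length t) (n * K)); [|discriminate].
    injection Ha as <- <- <- <-. split; [apply Nat.Div0.div_lt_upper_bound; lia|].
    unfold is_dist, rsum. fold (sumL (bern s) (seq 0 2)).
    split; [split; [intros m; unfold bern | rewrite sumL_two; unfold bern; simpl; lra]|].
    + destruct (Nat.eqb m 0); [|destruct (Nat.eqb m 1)]; lra.
    + intros x _. fold (sumL (vote s (length t mod K) x) (seq 0 2)). rewrite sumL_two.
      unfold vote, bern; simpl. split; [intros m|];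
        destruct (Nat.eqb x _); try (destruct (Nat.eqb m 0)); try (destruct (Nat.eqb m 1)); lra.
Qed.

(** Regrouping the [n K] rounds into [n] blocks of [K]: the rounds about a fixed
    candidate [y] are one per block. *)
Lemma prodL_blocks (K y : nat) (G : nat -> R) n : (y < K)%nat ->
  prodL (fun k => if Nat.eqb (k mod K)%nat y then G (k / K)%nat else 1) (seq 0 (n * K))
  = prodL G (seq 0 n).
Proof.
  intros Hy. induction n as [|n IH]; [reflexivity|].
  replace (S n * K)%nat with (n * K + K)%nat by lia.
  rewrite seq_app, prodL_app, IH, seq_S, prodL_app. f_equal. simpl (0 + n * K)%nat. simpl (0 + n)%nat.
  change (prodL G [n]) with (G n * 1). rewrite Rmult_1_r.
  rewrite seq_offset, prodL_map, (prodL_ext _ (fun j => if Nat.eqb j y then G n else 1)).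
  - rewrite prodL_factor_out, (prodL_ext _ (fun _ => 1)), prodL_const, pow1 by
      (lia || (intros a _; destruct (Nat.eqb a y); auto)). lra.
  - intros j Hj. apply in_seq in Hj.
    rewrite Nat.add_comm, Nat.Div0.mod_add, Nat.mod_small, Nat.div_add by lia.
    rewrite Nat.div_small by lia. reflexivity.
Qed.

Lemma ach_moment n K s x l (w : nat -> nat -> R) (cf : nat -> R) :
  (0 < K)%nat -> 0 <= s <= 1 ->
  (forall k, (k < n * K)%nat ->
     sumL (fun m => (if nth (k / K) l false then vote s (k mod K) x m else bern s m) * w k m)
          (seq 0 2) = cf k) ->
  sumL (fun t => tprob (ach n K s) x l [] t * pathw (fun pre m => w (length pre) m) [] t)
       (transcripts (ach n K s))
  = prodL cf (seq 0 (n * K)).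
Proof.
  intros HK Hs Hround. pose proof (ach_wf n K s HK Hs) as [Hlen _]. unfold transcripts.
  rewrite (expect_transcripts_from (ach n K s) x l _
             (fun pre => prodL cf (seq (length pre) (n * K - length pre)))); auto.
  - simpl. rewrite Nat.sub_0_r. lra.
  - intros pre Ha. simpl in Ha. destruct (Nat.ltb_spec (length pre) (n * K)); [discriminate|].
    replace (n * K - length pre)%nat with 0%nat by lia. reflexivity.
  - intros pre i M pq px Ha. pose proof Ha as Ha'. simpl in Ha.
    destruct (Nat.ltb_spec (length pre) (n * K)); [|discriminate].
    injection Ha as <- <- <- <-.
    replace (n * K - length pre)%nat with (S (n * K - S (length pre)))%nat by lia.
    change (prodL cf (seq (length pre) (S ?a))) with
      (cf (length pre) * prodL cf (seq (S (length pre)) a)).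
    rewrite <- (Hround (length pre)) by auto.
    rewrite (Rmult_comm (sumL _ _)), <- sumL_scal.
    apply sumL_ext. intros m Hm. apply in_seq in Hm. unfold stepw. rewrite Ha'.
    rewrite length_app, Nat.add_1_r.
    replace (Nat.ltb m 2) with true by (symmetry; apply Nat.ltb_lt; lia). lra.
Qed.

(** Number of [1]-bits about candidate [y] in the messages [t], the first of
    which is sent in round [k]. *)
Fixpoint votes (K y k : nat) (t : list nat) : R :=
  match t with
  | [] => 0
  | m :: r => (if Nat.eqb (k mod K)%nat y then INR m else 0) + votes K y (S k) r
  end.

Lemma pathw_votes K y lam pre rest :
  pathw (fun pre m => if Nat.eqb (length pre mod K)%nat y then exp (lam * INR m) else 1) pre rest
  = exp (lam * votes K y (length pre) rest).
Proof.
  revert pre; induction rest as [|m r IH]; intros pre; simpl.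
  - rewrite Rmult_0_r, exp_0. reflexivity.
  - rewrite IH, length_app, Nat.add_1_r.
    destruct (Nat.eqb (length pre mod K)%nat y).
    + rewrite <- exp_plus. f_equal. ring.
    + rewrite Rplus_0_l, Rmult_1_l. reflexivity.
Qed.

Section Moments.
Variables (n K : nat) (b s : R).
Hypothesis HK : (0 < K)%nat.
Hypothesis Hs : 0 <= s <= 1.

(** Moment generating function of the votes for a wrong candidate [y <> x]:
    they are [n] independent Bernoulli([s]) bits. *)
Lemma mgf_wrong_candidate x y lam : (x < K)%nat -> (y < K)%nat -> x <> y ->
  sumL (fun t => prT n b (ach n K s) x t * exp (lam * votes K y 0 t)) (transcripts (ach n K s))
  = ((1 - s) + s * exp lam) ^ n.
Proof.
  intros Hx Hy Hxy. rewrite expect_prT.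
  rewrite (sumL_ext _ (fun l => ((1 - s) + s * exp lam) ^ n * indep_prob b l)).
  - rewrite sumL_scal, indep_total. lra.
  - intros l _. rewrite Rmult_comm. f_equal.
    set (w := fun k m => if Nat.eqb (k mod K)%nat y then exp (lam * INR m) else 1).
    set (cf := fun k => if Nat.eqb (k mod K)%nat y then (1 - s) + s * exp lam else 1).
    transitivity (prodL cf (seq 0 (n * K))).
    + rewrite <- (ach_moment n K s x l w cf HK Hs).
      * apply sumL_ext. intros t _. unfold w. rewrite (pathw_votes K y lam [] t). reflexivity.
      * intros k Hk. rewrite sumL_two. unfold w, cf.
        rewrite bern_0, bern_1, vote_0, vote_1, INR_0, INR_1, Rmult_0_r, exp_0, Rmult_1_r.
        destruct (Nat.eqb_spec (k mod K)%nat y) as [E|E].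
        -- rewrite E. destruct (Nat.eqb_spec x y); [lia|]. destruct (nth (k / K) l false); lra.
        -- destruct (nth (k / K) l false); [destruct (Nat.eqb x (k mod K))|]; lra.
    + unfold cf. rewrite (prodL_blocks K y (fun _ => (1 - s) + s * exp lam)) by auto.
      rewrite prodL_const, length_seq. reflexivity.
Qed.

(** Moment generating function of the votes for the true candidate [x]: each
    player votes [1] surely if it knows [x], and with probability [s] otherwise. *)
Lemma mgf_true_candidate x lam : (x < K)%nat ->
  sumL (fun t => prT n b (ach n K s) x t * exp (lam * votes K x 0 t)) (transcripts (ach n K s))
  = (b * exp lam + (1 - b) * ((1 - s) + s * exp lam)) ^ n.
Proof.
  intros Hx. rewrite expect_prT.
  set (f := fun (i : nat) (bb : bool) => if bb then exp lam else (1 - s) + s * exp lam).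
  rewrite (sumL_ext _ (fun l => indep_prob b l * prodL (fun i => f i (nth i l false)) (seq 0 n))).
  - rewrite (indep_expect_prod b n f). unfold bexp, f.
    rewrite prodL_const, length_seq. reflexivity.
  - intros l _. f_equal.
    set (w := fun k m => if Nat.eqb (k mod K)%nat x then exp (lam * INR m) else 1).
    set (cf := fun k => if Nat.eqb (k mod K)%nat x then f (k / K)%nat (nth (k / K) l false) else 1).
    transitivity (prodL cf (seq 0 (n * K))).
    + rewrite <- (ach_moment n K s x l w cf HK Hs).
      * apply sumL_ext. intros t _. unfold w. rewrite (pathw_votes K x lam [] t). reflexivity.
      * intros k Hk. rewrite sumL_two. unfold w, cf, f.
        rewrite bern_0, bern_1, vote_0, vote_1, INR_0, INR_1, Rmult_0_r, exp_0, Rmult_1_r.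
        destruct (Nat.eqb_spec (k mod K)%nat x) as [E|E].
        -- rewrite E, Nat.eqb_refl. destruct (nth (k / K) l false); lra.
        -- destruct (nth (k / K) l false); [destruct (Nat.eqb_spec x (k mod K)); [lia|]|]; lra.
    + unfold cf. rewrite (prodL_blocks K x (fun i => f i (nth i l false))) by auto. reflexivity.
Qed.

End Moments.

(** Comparing two path weights that coincide except in round [k0], where
    [s phi <= psi]: the factor [s] is paid only while round [k0] is ahead. *)
Lemma pathw_compare_one_round (phi psi : list nat -> nat -> R) k0 s :
  0 <= s <= 1 -> (forall q m, 0 <= phi q m) ->
  (forall q m, length q = k0 -> s * phi q m <= psi q m) ->
  (forall q m, length q <> k0 -> phi q m = psi q m) ->
  forall rest pre,
  (if Nat.leb (length pre) k0 then s else 1) * pathw phi pre rest <= pathw psi pre rest.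
Proof.
  intros Hs Hphi Hk0 Hother. induction rest as [|m r IH]; intros pre; simpl.
  - destruct (Nat.leb _ _); lra.
  - specialize (IH (pre ++ [m])). rewrite length_app in IH. simpl length in IH.
    pose proof (pathw_nonneg phi (pre ++ [m]) r Hphi) as HP.
    pose proof (Hphi pre m) as Hpm.
    destruct (Nat.eq_dec (length pre) k0) as [E|E].
    + rewrite E, Nat.leb_refl. rewrite E in IH.
      replace (Nat.leb (k0 + 1) k0) with false in IH by (symmetry; apply Nat.leb_gt; lia).
      pose proof (Hk0 pre m E). rewrite Rmult_1_l in IH.
      apply Rle_trans with (psi pre m * pathw phi (pre ++ [m]) r);
        [rewrite <- Rmult_assoc; apply Rmult_le_compat_r; auto | apply Rmult_le_compat_l; nra].
    + rewrite (Hother pre m E) in Hpm |- *.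
      destruct (Nat.leb_spec (length pre) k0).
      * replace (Nat.leb (length pre + 1) k0) with true in IH by (symmetry; apply Nat.leb_le; lia).
        rewrite <- Rmult_assoc, (Rmult_comm s), Rmult_assoc. apply Rmult_le_compat_l; auto.
      * replace (Nat.leb (length pre + 1) k0) with false in IH by (symmetry; apply Nat.leb_gt; lia).
        rewrite !Rmult_1_l in *. apply Rmult_le_compat_l; auto.
Qed.

Section AchSafety.
Variables (n K : nat) (s : R) (x i : nat).
Hypothesis HK : (0 < K)%nat.
Hypothesis Hs : 0 <= s <= 1.
Hypothesis Hx : (x < K)%nat.

Lemma ach_facstep_other pre m : length pre <> (i * K + x)%nat ->
  facstep (ach n K s) x i true pre m = facstep (ach n K s) x i false pre m.
Proof.
  intros Hne. unfold facstep; simpl. destruct (Nat.ltb _ _); [|reflexivity].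
  destruct (Nat.eqb_spec (length pre / K) i); [|reflexivity].
  unfold vote. destruct (Nat.eqb_spec x (length pre mod K)); [|reflexivity].
  exfalso. apply Hne. rewrite (Nat.div_mod (length pre) K) by lia. lia.
Qed.

(** In that round, a knowing player sends [1] surely, an ignorant one with
    probability [s]. *)
Lemma ach_facstep_round pre m : length pre = (i * K + x)%nat ->
  s * facstep (ach n K s) x i true pre m <= facstep (ach n K s) x i false pre m.
Proof.
  intros He. unfold facstep; simpl. destruct (Nat.ltb _ _); [|lra].
  assert (E1 : (length pre / K = i)%nat) by (rewrite He, Nat.div_add_l, Nat.div_small; lia).
  assert (E2 : (length pre mod K = x)%nat)
    by (rewrite He, Nat.add_comm, Nat.Div0.mod_add; apply Nat.mod_small; lia).
  rewrite E1, E2, Nat.eqb_refl. unfold vote, bern. rewrite Nat.eqb_refl.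
  destruct (Nat.eqb_spec m 0); [subst; simpl; lra|].
  destruct (Nat.eqb m 1); lra.
Qed.

Lemma ach_fac_ratio t : s * fac (ach n K s) x i true [] t <= fac (ach n K s) x i false [] t.
Proof.
  pose proof (ach_wf n K s HK Hs) as Hw.
  assert (Hnn : forall q m, 0 <= facstep (ach n K s) x i true q m).
  { intros q m. pose proof (fac_nonneg n K (ach n K s) x Hw Hx i true q [m]) as Hq.
    unfold fac in Hq; simpl in Hq. lra. }
  pose proof (pathw_compare_one_round _ _ (i * K + x) s Hs Hnn
                ach_facstep_round ach_facstep_other t []) as H.
  replace (Nat.leb (length []) (i * K + x)) with true in H by reflexivity.
  exact H.
Qed.

End AchSafety.

Lemma ach_bias_range b c : 0 < b -> b < c -> c < 1 -> 0 < b * (1 - c) / (c * (1 - b)) <= 1.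
Proof.
  intros Hb Hbc Hc. split; [apply Rdiv_lt_0_compat; nra|].
  apply (Rmult_le_reg_r (c * (1 - b))); [nra|]. field_simplify; nra.
Qed.

(** With [s = b (1 - c) / (c (1 - b))], every transcript of [ach] is safe:
    the posterior [b F1 / (b F1 + (1 - b) F0)] is at most
    [b / (b + (1 - b) s) = c]. *)
Lemma ach_safe n K b c s x i t : (0 < K)%nat -> (x < K)%nat -> (i < n)%nat ->
  0 < b -> b < c -> c < 1 -> s = b * (1 - c) / (c * (1 - b)) -> 0 < s <= 1 ->
  0 < prT n b (ach n K s) x t -> posterior n b (ach n K s) i x t <= c.
Proof.
  intros HK Hx Hi Hb Hbc Hc Hsdef Hs Hp.
  pose proof (ach_wf n K s HK ltac:(lra)) as Hw.
  destruct (prT_split_player n K b (ach n K s) x t Hw i Hi) as [E1 E2].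
  pose proof (ach_fac_ratio n K s x i HK ltac:(lra) Hx t) as Hratio.
  pose proof (others_nonneg n K b (ach n K s) x t Hw Hx ltac:(lra) i) as HO.
  pose proof (fac_nonneg n K (ach n K s) x Hw Hx i true [] t) as HF1.
  set (F1 := fac (ach n K s) x i true [] t) in *. set (F0 := fac (ach n K s) x i false [] t) in *.
  set (O := others b (ach n K s) x t n i) in *.
  assert (Hkey : b * F1 <= c * gfac b (ach n K s) x t i).
  { unfold gfac, bexp. fold F1 F0.
    assert (Hsc : b * (1 - c) = c * (1 - b) * s) by (rewrite Hsdef; field; lra).
    assert (b * (1 - c) * F1 <= c * (1 - b) * F0)
      by (rewrite Hsc, Rmult_assoc; apply Rmult_le_compat_l; nra).
    nra. }
  unfold posterior. rewrite E2. apply (Rmult_le_reg_r (prT n b (ach n K s) x t)); [auto|].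
  unfold Rdiv. rewrite Rmult_assoc, Rinv_l, Rmult_1_r by lra. rewrite E1.
  replace (c * (O * gfac b (ach n K s) x t i)) with (O * (c * gfac b (ach n K s) x t i)) by ring.
  apply Rmult_le_compat_l; auto.
Qed.

Definition decode (K : nat) (thr : R) (t : list nat) : nat :=
  match find (fun y => Rle_bool thr (votes K y 0 t)) (seq 0 K) with Some y => y | None => 0%nat end.

Lemma decode_lt K thr t : (0 < K)%nat -> (decode K thr t < K)%nat.
Proof.
  intros HK. unfold decode. destruct (find _ _) eqn:E; [|auto].
  apply find_some in E as [E _]. apply in_seq in E. lia.
Qed.

Lemma find_seq_first (p : nat -> bool) x s len : (s <= x < s + len)%nat -> p x = true ->
  (forall y, (s <= y < x)%nat -> p y = false) -> find p (seq s len) = Some x.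
Proof.
  revert s; induction len as [|len IH]; intros s Hx Hp Hlt; [lia|].
  change (seq s (S len)) with (s :: seq (S s) len). simpl.
  destruct (Nat.eq_dec s x) as [<-|Ne]; [rewrite Hp; reflexivity|].
  rewrite Hlt by lia. apply IH; auto; [lia|]. intros; apply Hlt; lia.
Qed.

Lemma Rle_bool_true a c : Rle_bool a c = true <-> a <= c.
Proof. unfold Rle_bool. destruct (Rle_dec a c); split; intros; auto; try discriminate; lra. Qed.

Definition miss (K x : nat) (thr : R) (t : list nat) : R :=
  if Rle_bool thr (votes K x 0 t) then 0 else 1.
Definition false_alarm (K y : nat) (thr : R) (t : list nat) : R :=
  if Rle_bool thr (votes K y 0 t) then 1 else 0.
Definition decoding_errors (K x : nat) (thr : R) (t : list nat) : R :=
  miss K x thr t + sumL (fun y => if Nat.eqb y x then 0 else false_alarm K y thr t) (seq 0 K).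

Lemma good_unless_error n b c P K x thr t : (x < K)%nat -> 0 <= prT n b P x t ->
  (forall i, (i < n)%nat -> 0 < prT n b P x t -> posterior n b P i x t <= c) ->
  prT n b P x t - prT n b P x t * decoding_errors K x thr t
  <= if good n b c P (decode K thr) x t then prT n b P x t else 0.
Proof.
  intros Hx Hp Hsafe.
  set (fa := fun y => if Nat.eqb y x then 0 else false_alarm K y thr t).
  assert (Hterms : forall y, In y (seq 0 K) -> 0 <= fa y)
    by (intros y _; unfold fa, false_alarm; destruct (Nat.eqb y x); [|destruct (Rle_bool thr (votes K y 0 t))]; lra).
  pose proof (sumL_nonneg fa (seq 0 K) Hterms) as Hsum.
  assert (Herr : 0 <= decoding_errors K x thr t).
  { unfold decoding_errors, miss. fold fa. destruct (Rle_bool thr (votes K x 0 t)); lra. }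
  destruct (good n b c P (decode K thr) x t) eqn:G; [nra|].
  destruct (Req_dec (prT n b P x t) 0) as [Z|NZ]; [rewrite Z; lra|].
  destruct (Rlt_le_dec (decoding_errors K x thr t) 1) as [Hlt|Hge]; [exfalso|nra].
  assert (Hhit : Rle_bool thr (votes K x 0 t) = true).
  { unfold decoding_errors, miss in Hlt. fold fa in Hlt.
    destruct (Rle_bool thr (votes K x 0 t)); [auto|lra]. }
  assert (Hquiet : forall y, (y < K)%nat -> y <> x -> Rle_bool thr (votes K y 0 t) = false).
  { intros y Hy Hne. unfold decoding_errors, miss in Hlt. rewrite Hhit in Hlt. fold fa in Hlt.
    assert (Hfa : fa y = false_alarm K y thr t)
      by (unfold fa; apply Nat.eqb_neq in Hne; rewrite Hne; reflexivity).
    pose proof (sumL_elem_le fa _ y Hterms ltac:(apply in_seq; lia)) as H1.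
    rewrite Hfa in H1. unfold false_alarm in H1.
    destruct (Rle_bool thr (votes K y 0 t)); [lra|auto]. }
  assert (Hdec : decode K thr t = x).
  { unfold decode. rewrite (find_seq_first _ x 0 K); auto; [lia|]. intros y Hy. apply Hquiet; lia. }
  unfold good in G. rewrite Hdec, Nat.eqb_refl, Bool.andb_true_r in G.
  assert (Hall : forallb (fun i => Rle_bool (posterior n b P i x t) c) (seq 0 n) = true).
  { apply forallb_forall. intros i Hi. apply in_seq in Hi. apply Rle_bool_true.
    apply Hsafe; [lia|]. pose proof Hp. lra. }
  congruence.
Qed.

Lemma miss_le K x thr t mu : 0 <= mu ->
  miss K x thr t <= exp (mu * thr) * exp (- mu * votes K x 0 t).
Proof.
  intros Hmu. unfold miss. rewrite <- exp_plus. destruct (Rle_bool thr (votes K x 0 t)) eqn:E.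
  - left; apply exp_pos.
  - assert (~ thr <= votes K x 0 t) by (rewrite <- Rle_bool_true; congruence).
    pose proof (exp_ineq1_le (mu * thr + - mu * votes K x 0 t)). nra.
Qed.

Lemma false_alarm_le K y thr t lam : 0 <= lam ->
  false_alarm K y thr t <= exp (- lam * thr) * exp (lam * votes K y 0 t).
Proof.
  intros Hl. unfold false_alarm. rewrite <- exp_plus. destruct (Rle_bool thr (votes K y 0 t)) eqn:E.
  - apply Rle_bool_true in E. pose proof (exp_ineq1_le (- lam * thr + lam * votes K y 0 t)). nra.
  - left; apply exp_pos.
Qed.

Section ErrorMass.
Variables (n K : nat) (b s : R) (x : nat) (thr : R).
Hypothesis HK : (0 < K)%nat.
Hypothesis Hs : 0 <= s <= 1.
Hypothesis Hx : (x < K)%nat.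
Hypothesis Hb : 0 <= b <= 1.

Lemma miss_mass_bound mu : 0 <= mu ->
  sumL (fun t => prT n b (ach n K s) x t * miss K x thr t) (transcripts (ach n K s)) <=
  exp (mu * thr) * (b * exp (- mu) + (1 - b) * ((1 - s) + s * exp (- mu))) ^ n.
Proof.
  intros Hmu. pose proof (ach_wf n K s HK Hs) as Hw.
  rewrite <- (mgf_true_candidate n K b s HK Hs x (- mu) Hx), <- sumL_scal.
  apply sumL_le. intros t _.
  replace (exp (mu * thr) * (prT n b (ach n K s) x t * exp (- mu * votes K x 0 t)))
    with (prT n b (ach n K s) x t * (exp (mu * thr) * exp (- mu * votes K x 0 t))) by ring.
  apply Rmult_le_compat_l; [apply (prT_nonneg n K); auto | apply miss_le; auto].
Qed.

Lemma false_alarm_mass_bound lam : 0 <= lam ->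
  sumL (fun t => sumL (fun y => prT n b (ach n K s) x t *
                         (if Nat.eqb y x then 0 else false_alarm K y thr t)) (seq 0 K))
       (transcripts (ach n K s))
  <= INR K * (exp (- lam * thr) * ((1 - s) + s * exp lam) ^ n).
Proof.
  intros Hlam. pose proof (ach_wf n K s HK Hs) as Hw. rewrite sumL_swap.
  replace (INR K) with (INR (length (seq 0 K))) by (rewrite length_seq; reflexivity).
  rewrite <- sumL_const. apply sumL_le. intros y Hy. apply in_seq in Hy.
  destruct (Nat.eqb_spec y x) as [Eyx|Nyx].
  - rewrite (sumL_ext _ (fun _ => 0)), sumL_const by (intros; lra).
    rewrite Rmult_0_r. apply Rmult_le_pos; [left; apply exp_pos|]. apply pow_le.
    pose proof (exp_pos lam). nra.
  - rewrite <- (mgf_wrong_candidate n K b s HK Hs x y lam Hx ltac:(lia) ltac:(auto)), <- sumL_scal.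
    apply sumL_le. intros t _.
    replace (exp (- lam * thr) * (prT n b (ach n K s) x t * exp (lam * votes K y 0 t)))
      with (prT n b (ach n K s) x t * (exp (- lam * thr) * exp (lam * votes K y 0 t))) by ring.
    apply Rmult_le_compat_l; [apply (prT_nonneg n K); auto | apply false_alarm_le; auto].
Qed.

End ErrorMass.

(** Success probability of [ach] with the threshold decoder: every transcript
    is safe, so only the two decoding errors can make it bad. *)
Lemma ach_success_bound n K b c s x thr mu lam : (0 < K)%nat -> (x < K)%nat ->
  0 < b -> b < c -> c < 1 -> s = b * (1 - c) / (c * (1 - b)) -> 0 < s <= 1 ->
  0 <= mu -> 0 <= lam ->
  1 - exp (mu * thr) * (b * exp (- mu) + (1 - b) * ((1 - s) + s * exp (- mu))) ^ n
    - INR K * (exp (- lam * thr) * ((1 - s) + s * exp lam) ^ n)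
  <= sumL (fun t => if good n b c (ach n K s) (decode K thr) x t then prT n b (ach n K s) x t else 0)
          (transcripts (ach n K s)).
Proof.
  intros HK Hx Hb Hbc Hc Hsdef Hs Hmu Hlam.
  pose proof (ach_wf n K s HK ltac:(lra)) as Hw.
  eapply Rle_trans; [|apply sumL_le; intros t _; apply good_unless_error; auto;
    [apply (prT_nonneg n K); auto; lra | intros i Hi Hp; apply (ach_safe n K b c s x i t); auto]].
  rewrite sumL_minus.
  rewrite (sumL_ext (fun t => prT n b (ach n K s) x t * decoding_errors K x thr t)
     (fun t => prT n b (ach n K s) x t * miss K x thr t +
     sumL (fun y => prT n b (ach n K s) x t * (if Nat.eqb y x then 0 else false_alarm K y thr t))
          (seq 0 K)))
     by (intros t _; unfold decoding_errors; rewrite sumL_scal; lra).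
  rewrite sumL_plus, (prT_total n K b (ach n K s) x Hw Hx).
  pose proof (miss_mass_bound n K b s x thr HK ltac:(lra) Hx ltac:(lra) mu Hmu).
  pose proof (false_alarm_mass_bound n K b s x thr HK ltac:(lra) Hx ltac:(lra) lam Hlam).
  lra.
Qed.

Lemma chernoff_miss_exponent theta a : 0 < theta < a -> a < 1 ->
  exists mu, 0 <= mu /\ 0 < exp (mu * theta) * (1 - a + a * exp (- mu)) < 1.
Proof.
  intros Hth Ha. set (z := (theta / a + 1) / 2).
  assert (Hta : theta / a < 1) by (apply (Rmult_lt_reg_r a); [lra|]; field_simplify; lra).
  assert (Htz : theta < a * z) by (unfold z; field_simplify; [|lra]; nra).
  assert (Hz : 0 < z < 1) by (unfold z; split; [|lra]; pose proof (Rdiv_lt_0_compat theta a); lra).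
  exists (- ln z). split; [pose proof (ln_neg z Hz); lra|].
  rewrite Ropp_involutive, exp_ln by lra.
  split; [apply Rmult_lt_0_compat; [apply exp_pos | nra]|].
  (* [exp (theta ln z) >= 1 + theta ln z >= 1 - theta (1 / z - 1) > 1 - a (1 - z)] *)
  pose proof (exp_ineq1_le (theta * ln z)) as H1.
  pose proof (ln_le_sub1 (/ z) ltac:(apply Rinv_0_lt_compat; lra)) as H2.
  rewrite ln_Rinv in H2 by lra.
  assert (H3 : theta * (/ z - 1) < a * (1 - z)).
  { replace (theta * (/ z - 1)) with (theta / z * (1 - z)) by (field; lra).
    apply Rmult_lt_compat_r; [lra|]. apply (Rmult_lt_reg_r z); [lra|]. field_simplify; lra. }
  assert (H4 : exp (- ln z * theta) * exp (theta * ln z) = 1)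
    by (rewrite <- exp_plus; replace (- ln z * theta + theta * ln z) with 0 by ring; apply exp_0).
  assert (H5 : 1 - a + a * z < exp (theta * ln z)).
  { assert (theta * (- ln z) <= theta * (/ z - 1)) by (apply Rmult_le_compat_l; lra). lra. }
  apply Rlt_le_trans with (exp (- ln z * theta) * exp (theta * ln z)); [|lra].
  apply Rmult_lt_compat_l; [apply exp_pos | exact H5].
Qed.

Lemma ach_error_exponents n b c Rt theta mu s K x : 0 < b -> b < c -> c < 1 -> 0 <= Rt ->
  0 <= mu -> s = b * (1 - c) / (c * (1 - b)) -> K = Xsize (INR n * Rt) -> (x < K)%nat ->
  1 - (exp (mu * theta) * (1 - b / c + b / c * exp (- mu))) ^ n
    - 2 * exp (- (theta * (- ln (1 - c)) + ln (1 - b) - Rt * ln 2)) ^ n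
  <= sumL (fun t => if good n b c (ach n K s) (decode K (theta * INR n)) x t
                    then prT n b (ach n K s) x t else 0) (transcripts (ach n K s)).
Proof.
  intros Hb Hbc Hc HRt Hmu Hsdef HKdef Hx. set (L := - ln (1 - c)).
  assert (HL : 0 < L) by (unfold L; pose proof (ln_neg (1 - c)); lra).
  assert (Hs : 0 < s <= 1) by (rewrite Hsdef; apply ach_bias_range; auto).
  assert (HK : (0 < K)%nat) by (rewrite HKdef; apply Xsize_pos).
  eapply Rle_trans; [|apply (ach_success_bound n K b c s x (theta * INR n) mu L); auto; lra].
  assert (Emiss : exp (mu * (theta * INR n)) * (b * exp (- mu) + (1 - b) * (1 - s + s * exp (- mu))) ^ n
                  = (exp (mu * theta) * (1 - b / c + b / c * exp (- mu))) ^ n).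
  { rewrite Rpow_mult_distr, <- exp_INR_pow. f_equal; [f_equal; ring|].
    f_equal. rewrite Hsdef. field. lra. }
  assert (EL : (1 - s) + s * exp L = exp (- ln (1 - b))).
  { unfold L. rewrite exp_Ropp, exp_Ropp, exp_ln, exp_ln by lra. rewrite Hsdef. field. lra. }
  assert (Ealarm : exp (- L * (theta * INR n)) * ((1 - s) + s * exp L) ^ n
                   = exp (- (theta * L + ln (1 - b))) ^ n).
  { rewrite EL, <- !exp_INR_pow, <- exp_plus. f_equal. ring. }
  assert (HKbound : INR K * exp (- (theta * L + ln (1 - b))) ^ n
                    <= 2 * exp (- (theta * L + ln (1 - b) - Rt * ln 2)) ^ n).
  { rewrite HKdef. eapply Rle_trans.
    - apply Rmult_le_compat_r; [apply pow_le; left; apply exp_pos|].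
      apply Xsize_le. apply Rmult_le_pos; [apply pos_INR | lra].
    - rewrite <- !exp_INR_pow, Rmult_assoc, <- exp_plus. right. do 2 f_equal. ring. }
  rewrite Emiss, Ealarm. fold L. lra.
Qed.

(** A vote threshold [theta] strictly between the false-alarm level
    [(r - v) / L] and the mean vote fraction [a]. *)
Lemma threshold_choice r v L a : 0 < L -> 0 < r - v -> r - v < a * L ->
  exists theta, 0 < theta < a /\ r < theta * L + v.
Proof.
  intros HL Hrv Ha. exists (((r - v) / L + a) / 2).
  assert (H1 : 0 < (r - v) / L) by (apply Rdiv_lt_0_compat; lra).
  assert (H2 : (r - v) / L * L = r - v) by (field; lra).
  assert (H3 : (r - v) / L < a) by (apply (Rmult_lt_reg_r L); lra).
  split; [lra|]. nra.
Qed.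

Lemma safely_achievable_of_lt b c Rt : 0 < b -> b < c -> c < 1 -> 0 <= Rt ->
  Rt * ln 2 < ln (1 - b) + kappa c * b -> safely_achievable b c Rt.
Proof.
  intros Hb Hbc Hc HRt Hrate eps Heps n0.
  set (a := b / c). set (L := - ln (1 - c)). set (s := b * (1 - c) / (c * (1 - b))).
  assert (HL : 0 < L) by (unfold L; pose proof (ln_neg (1 - c)); lra).
  assert (Hlb : ln (1 - b) < 0) by (apply ln_neg; lra).
  assert (Ha : 0 < a < 1) by (unfold a; split; [apply Rdiv_lt_0_compat|
    apply (Rmult_lt_reg_r c); [|field_simplify]]; lra).
  assert (Hs : 0 < s <= 1) by (apply ach_bias_range; auto).
  assert (HaL : kappa c * b = a * L) by (unfold kappa, a, L; field; lra).
  rewrite HaL in Hrate.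
  destruct (threshold_choice (Rt * ln 2) (ln (1 - b)) L a HL
              ltac:(pose proof ln_lt_2; nra) ltac:(lra)) as [theta [Htheta Hmargin]].
  set (gam := theta * L + ln (1 - b) - Rt * ln 2).
  assert (Hgam : 0 < gam) by (unfold gam; lra).
  destruct (chernoff_miss_exponent theta a Htheta (proj2 Ha)) as [mu [Hmu Hrho]].
  set (rho := exp (mu * theta) * (1 - a + a * exp (- mu))) in Hrho.
  assert (Hrho1 : 0 < exp (- gam) < 1)
    by (split; [apply exp_pos | rewrite <- exp_0; apply exp_increasing; lra]).
  destruct (pow_lt_1_zero rho ltac:(rewrite Rabs_pos_eq; lra) (eps / 2) ltac:(lra)) as [N1 HN1].
  destruct (pow_lt_1_zero (exp (- gam)) ltac:(rewrite Rabs_pos_eq; lra) (eps / 4) ltac:(lra))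
    as [N2 HN2].
  set (n := Nat.max n0 (Nat.max N1 N2)).
  specialize (HN1 n ltac:(unfold n; lia)). specialize (HN2 n ltac:(unfold n; lia)).
  rewrite Rabs_pos_eq in HN1, HN2 by (apply pow_le; lra).
  set (K := Xsize (INR n * Rt)).
  exists n. split; [unfold n; lia|]. exists (ach n K s), (decode K (theta * INR n)).
  assert (HK : (0 < K)%nat) by apply Xsize_pos.
  split; [split; [|split]|].
  - apply ach_wf; auto; lra.
  - intros t. apply decode_lt; auto.
  - intros x Hx. fold K in Hx.
    eapply Rle_trans; [|apply (ach_error_exponents n b c Rt theta mu s K x); auto].
    fold a L gam rho. lra.
  - intros i x t Hi Hx Hp. apply (ach_safe n K b c s x i t); auto.
Qed.

Theorem corollary4p3 (b c : R) (hb : 0 < b) (hbc : b < c) (hc : c < 1) :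
  is_safe_capacity b c ((- b * log2 (1 - c) + c * log2 (1 - b)) / c).
Proof.
  set (cap := (- b * log2 (1 - c) + c * log2 (1 - b)) / c).
  assert (Hln2 : 0 < ln 2) by (pose proof ln_lt_2; lra).
  assert (Ecap : cap * ln 2 = ln (1 - b) + kappa c * b) by (unfold cap, log2, kappa; field; lra).
  assert (Hcap : 0 < cap).
  { apply (Rmult_lt_reg_r (ln 2)); [lra|]. rewrite Ecap, Rmult_0_l. apply capacity_pos; auto. }
  split.
  - intros Rt HRt. apply (Rmult_le_reg_r (ln 2)); [lra|]. rewrite Ecap.
    apply safely_achievable_le; auto.
  - intros u Hu. apply Rnot_lt_le. intros Hlt.
    set (Rt := (Rmax 0 u + cap) / 2).
    assert (Hmax : Rmax 0 u < cap) by (apply Rmax_lub_lt; lra).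
    assert (Hach : safely_achievable b c Rt).
    { apply safely_achievable_of_lt; auto; [unfold Rt; pose proof (Rmax_l 0 u); lra|].
      rewrite <- Ecap. apply Rmult_lt_compat_r; [lra|]. unfold Rt; lra. }
    pose proof (Hu Rt Hach). pose proof (Rmax_r 0 u). unfold Rt in *. lra.
Qed.
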